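(* Let $N\ge3$ and let $l_0$ be the trajectory of system (S2) on the unstable manifold of $Q_1=(0,0,0)$ contained in the plane $\{z=0\}$ with $x>0$ (leaving $Q_1$ tangent to $(N,-1,0)$). Writing $(X,Y,Z)=(1/x,\,y/x,\,z/x)$ along it, and with $p_F(\sigma)=m+\frac{\sigma+2}{N}$: (a) If $m<p<p_F(\sigma)$, then along $l_0$, $Y\to-\infty$ and $X/Y\to0$ (and $Z\equiv0$), i.e. $l_0$ connects to the critical point at infinity $Q_5$. (b) If $p=p_F(\sigma)$, then $l_0$ is exactly the half-line $\{y=-x/N,\ z=0,\ x>0\}$ and it connects to $P_2$, i.e. $(X,Y,Z)\to\left(0,-\frac{p-m}{\sigma+2},0\right)$. (c) If $p>p_F(\sigma)$, then $l_0$ connects to $P_1$, i.e. $(X,Y,Z)\to(0,0,0)$.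
   Context: Let $m>1$, $\sigma>0$, $p>m$. System (S2) is $$\dot x=x(2-(m-1)y),\quad \dot y=-x-(N-2)y+z-my^2-\tfrac{p-m}{\sigma+2}xy,\quad \dot z=z(\sigma+2+(p-m)y),$$ and under $X=1/x$, $Y=y/x$, $Z=z/x$ (with a time change) it is equivalent to system (S1): $$\dot X=X[(m-1)Y-2X],\quad \dot Y=-Y^2-\tfrac{p-m}{\sigma+2}Y-X-NXY+XZ,\quad \dot Z=Z[(p-1)Y+\sigma X].$$ Limits are taken as the trajectory's parameter tends to $+\infty$. *)

From Stdlib Require Import Reals.
From Coquelicot Require Import Coquelicot.
Open Scope R_scope.

Definition S2_f (m : R) : R -> R -> R := fun x y => x * (2 - (m - 1) * y).
Definition S2_g (N m sigma p : R) : R -> R -> R -> R :=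
  fun x y z => - x - (N - 2) * y + z - m * y ^ 2 - (p - m) / (sigma + 2) * x * y.
Definition S2_h (m sigma p : R) : R -> R -> R :=
  fun y z => z * (sigma + 2 + (p - m) * y).

Definition S2_sol (N m sigma p : R) (T : Rbar) (x y z : R -> R) : Prop :=
  forall t : R, Rbar_lt t T ->
    is_derive x t (S2_f m (x t) (y t)) /\
    is_derive y t (S2_g N m sigma p (x t) (y t) (z t)) /\
    is_derive z t (S2_h m sigma p (y t) (z t)).

Definition S2_maximal (N m sigma p : R) (T : Rbar) (x y z : R -> R) : Prop :=
  forall (T' : Rbar) (x' y' z' : R -> R),
    Rbar_lt T T' -> S2_sol N m sigma p T' x' y' z' ->
    ~ (forall t : R, Rbar_lt t T -> x' t = x t /\ y' t = y t /\ z' t = z t).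

Definition end_filter (T : Rbar) : (R -> Prop) -> Prop :=
  match T with
  | Finite a => at_left a
  | _ => Rbar_locally T
  end.

Definition pF (N m sigma : R) : R := m + (sigma + 2) / N.

Definition X1 (x : R -> R) : R -> R := fun t => / x t.
Definition Y1 (x y : R -> R) : R -> R := fun t => y t / x t.
Definition Z1 (x z : R -> R) : R -> R := fun t => z t / x t.

From Stdlib Require Import Reals Lra Lia Classical.
From Coquelicot Require Import Coquelicot.
Open Scope R_scope.

(* Along l0, z = 0 and x > 0.  Since y -> 0 at -oo, -y solves a linear equation with
   damping N - 2 + m y + k x > 0 near -oo (k = (p - m)/(sigma + 2)) and forcing x > 0,
   so y < 0.  Likewise w = y + x/N solves w' = -(N - 2 + m y) w - (k - 1/N) x y, so w
   has the sign of k - 1/N, i.e. of p - p_F, and vanishes identically when p = p_F.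
   A maximal solution cannot stay bounded up to a finite end (local existence by Picard
   iteration, uniqueness by Gronwall), and monotone quantities decide each case:
   for p > p_F, x stays bounded on bounded intervals, so the solution is global, x
   grows at least linearly and Y -> 0; for p = p_F, 1/x + (m - 1) t / N decreases, so
   x blows up in finite time along y = -x/N; for p < p_F, -1/y + (m - kN) t / 2
   eventually decreases, so -y blows up in finite time, and a logarithmic comparison
   shows Y -> -oo. *)

Lemma MVT_is_derive (f f' : R -> R) (a b : R) : a < b ->
  (forall t, a <= t <= b -> is_derive f t (f' t)) ->
  exists c, f b - f a = f' c * (b - a) /\ a < c < b.
Proof.
  intros Hab Hd; apply MVT_cor2; auto.
  intros c Hc; apply is_derive_Reals; auto.
Qed.

Lemma is_derive_pos_lt (f f' : R -> R) (a b : R) : a < b ->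
  (forall t, a <= t <= b -> is_derive f t (f' t)) ->
  (forall t, a < t < b -> 0 < f' t) -> f a < f b.
Proof.
  intros Hab Hd Hp; destruct (MVT_is_derive f f' a b Hab Hd) as [c [Hc Hac]].
  specialize (Hp c Hac); nra.
Qed.

Lemma is_derive_nonneg_le (f f' : R -> R) (a b : R) : a <= b ->
  (forall t, a <= t <= b -> is_derive f t (f' t)) ->
  (forall t, a < t < b -> 0 <= f' t) -> f a <= f b.
Proof.
  intros Hab Hd Hp; destruct (Rle_lt_or_eq_dec a b Hab) as [Hlt|<-]; [|lra].
  destruct (MVT_is_derive f f' a b Hlt Hd) as [c [Hc Hac]].
  specialize (Hp c Hac); nra.
Qed.

Lemma is_derive_nonpos_le (f f' : R -> R) (a b : R) : a <= b ->
  (forall t, a <= t <= b -> is_derive f t (f' t)) ->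
  (forall t, a < t < b -> f' t <= 0) -> f b <= f a.
Proof.
  intros Hab Hd Hp.
  enough (- f a <= - f b) by lra.
  apply (is_derive_nonneg_le (fun t => - f t) (fun t => - f' t)); auto.
  - intros t Ht; apply (is_derive_opp f t (f' t)); auto.
  - intros t Ht; specialize (Hp t Ht); lra.
Qed.

Lemma is_derive_zero_eq (f : R -> R) (a b : R) : a <= b ->
  (forall t, a <= t <= b -> is_derive f t 0) -> f b = f a.
Proof.
  intros Hab Hd; apply Rle_antisym.
  - apply (is_derive_nonpos_le f (fun _ => 0)); auto; intros; lra.
  - apply (is_derive_nonneg_le f (fun _ => 0)); auto; intros; lra.
Qed.

Lemma is_derive_eq_value (f : R -> R) (t l l' : R) :
  is_derive f t l -> l = l' -> is_derive f t l'.
Proof. now intros H <-. Qed.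

(* Side goals of [auto_derive] once the derivatives of [x], [y], ... are hypotheses. *)
Ltac close_ex_derive :=
  repeat split; try (eexists; eassumption); try assumption; try lra.

Ltac rewrite_Derive H := match type of H with is_derive ?f ?t ?l =>
  replace (Derive (fun s : R => f s) t) with l
    by (symmetry; apply is_derive_unique; exact H) end.

Lemma Rabs_minus_le (a b : R) : Rabs (a - b) <= Rabs a + Rabs b.
Proof. unfold Rminus; rewrite <- (Rabs_Ropp b); apply Rabs_triang. Qed.

Lemma Rabs_mult_le (a b A C : R) : Rabs a <= A -> Rabs b <= C -> Rabs (a * b) <= A * C.
Proof. intros; rewrite Rabs_mult; apply Rmult_le_compat; auto; apply Rabs_pos. Qed.

Definition lipschitz2 (f : R -> R -> R) (L : R) : Prop :=
  forall a c a' c', Rabs (f a c - f a' c') <= L * (Rabs (a - a') + Rabs (c - c')).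

Lemma lipschitz_on_ball_continuous (a : R -> R) (K c r t : R) : 0 <= K ->
  (forall t s, Rabs (t - c) <= r -> Rabs (s - c) <= r ->
     Rabs (a t - a s) <= K * Rabs (t - s)) ->
  Rabs (t - c) < r -> continuous a t.
Proof.
  intros HK Hl Ht; apply continuity_pt_filterlim; intros eps Heps.
  exists (Rmin (eps / (K + 1)) (r - Rabs (t - c))); split.
  { apply Rmin_pos; [apply Rdiv_lt_0_compat|]; lra. }
  intros s [_ Hs]; simpl in *; unfold R_dist in *.
  assert (H1 : Rabs (s - t) < eps / (K + 1)) by (eapply Rlt_le_trans; [exact Hs|apply Rmin_l]).
  assert (H2 : Rabs (s - t) < r - Rabs (t - c)) by (eapply Rlt_le_trans; [exact Hs|apply Rmin_r]).
  assert (Hsc : Rabs (s - c) <= r).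
  { replace (s - c) with ((s - t) + (t - c)) by ring.
    eapply Rle_trans; [apply Rabs_triang|]; lra. }
  eapply Rle_lt_trans; [exact (Hl s t Hsc (Rlt_le _ _ Ht))|].
  apply (Rmult_lt_compat_l (K + 1)) in H1; [|lra].
  replace ((K + 1) * (eps / (K + 1))) with eps in H1 by (field; lra).
  assert (P := Rabs_pos (s - t)); nra.
Qed.

Lemma continuous_lipschitz2_comp (f : R -> R -> R) (L : R) (a c : R -> R) (t : R) :
  0 <= L -> lipschitz2 f L -> continuous a t -> continuous c t ->
  continuous (fun s => f (a s) (c s)) t.
Proof.
  intros HL Hf Ha Hc.
  apply continuity_pt_filterlim in Ha; apply continuity_pt_filterlim in Hc.
  apply continuity_pt_filterlim; intros eps Heps.
  set (e := eps / (2 * (L + 1))).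
  assert (He : 0 < e) by (apply Rdiv_lt_0_compat; lra).
  destruct (Ha e He) as [d1 [Hd1 H1]], (Hc e He) as [d2 [Hd2 H2]].
  exists (Rmin d1 d2); split; [apply Rmin_pos; lra|].
  intros s [Hs0 Hs]; simpl in *; unfold R_dist in *.
  assert (A1 : Rabs (a s - a t) < e)
    by (apply H1; split; auto; eapply Rlt_le_trans; [exact Hs|apply Rmin_l]).
  assert (A2 : Rabs (c s - c t) < e)
    by (apply H2; split; auto; eapply Rlt_le_trans; [exact Hs|apply Rmin_r]).
  eapply Rle_lt_trans; [apply Hf|].
  assert (E : (L + 1) * (2 * e) = eps) by (unfold e; field; lra).
  assert (P := Rabs_pos (a s - a t)); assert (Q := Rabs_pos (c s - c t)); nra.
Qed.

Lemma abs_RInt_le_const_dist (F : R -> R) (a b K : R) : ex_RInt F a b ->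
  (forall s, Rmin a b <= s <= Rmax a b -> Rabs (F s) <= K) ->
  Rabs (RInt F a b) <= K * Rabs (b - a).
Proof.
  intros Hex Hb; destruct (Rle_or_lt a b) as [Hab|Hab].
  - rewrite (Rabs_right (b - a)), Rmult_comm by lra.
    apply abs_RInt_le_const; auto.
    intros t Ht; apply Hb; rewrite Rmin_left, Rmax_right; lra.
  - rewrite <- (opp_RInt_swap F b a) by (apply ex_RInt_swap; auto).
    change (opp (RInt F b a)) with (- RInt F b a).
    rewrite Rabs_Ropp, (Rabs_left (b - a)), Rmult_comm by lra.
    replace (- (b - a)) with (a - b) by ring.
    apply abs_RInt_le_const; [lra|apply ex_RInt_swap; auto|].
    intros t Ht; apply Hb; rewrite Rmin_right, Rmax_left; lra.
Qed.

Lemma is_derive_of_RInt_eq (w F : R -> R) (w0 t0 t : R) :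
  locally t (fun s => w s = w0 + RInt F t0 s /\ ex_RInt F t0 s) ->
  continuous F t -> is_derive w t (F t).
Proof.
  set (P := fun s => w s = w0 + RInt F t0 s /\ ex_RInt F t0 s).
  intros Hloc HF.
  apply (is_derive_ext_loc (fun s => w0 + RInt F t0 s)).
  { apply (filter_imp P); [intros s [Hs _]; symmetry; exact Hs|exact Hloc]. }
  assert (HR : is_derive (fun s => RInt F t0 s) t (F t)).
  { apply (is_derive_RInt (V := R_CompleteNormedModule) _ _ t0); auto.
    apply (filter_imp P); [intros s [_ Hs]|exact Hloc].
    apply (RInt_correct (V := R_CompleteNormedModule)); exact Hs. }
  apply (is_derive_eq_value _ _ _ _ (is_derive_plus (fun _ => w0) _ t 0 _ (is_derive_const w0 t) HR)).
  unfold plus; simpl; ring.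
Qed.

Lemma is_lim_seq_abs_minus_le (a b : nat -> R) (la lb K : R) :
  is_lim_seq a la -> is_lim_seq b lb ->
  (forall n, Rabs (a n - b n) <= K) -> Rabs (la - lb) <= K.
Proof.
  intros Ha Hb H.
  exact (is_lim_seq_le _ _ _ _ H (is_lim_seq_abs _ _ (is_lim_seq_minus' _ _ _ _ Ha Hb))
           (is_lim_seq_const K)).
Qed.

Lemma pow_half_lt (C eps : R) : 0 < eps -> 0 <= C ->
  exists N, forall n, (N <= n)%nat -> C * (1/2)^n < eps.
Proof.
  intros He HC.
  destruct (pow_lt_1_zero (1/2)) with (y := eps / (C + 1)) as [N HN].
  { rewrite Rabs_right; lra. } { apply Rdiv_lt_0_compat; lra. }
  exists N; intros n Hn; specialize (HN n Hn).
  rewrite Rabs_right in HN by (apply Rle_ge, pow_le; lra).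
  apply (Rmult_lt_compat_l (C + 1)) in HN; [|lra].
  replace ((C + 1) * (eps / (C + 1))) with eps in HN by (field; lra).
  assert (0 <= (1/2)^n) by (apply pow_le; lra); nra.
Qed.

Lemma eq_0_of_le_pow_half (a C : R) : 0 <= C ->
  (forall n, Rabs a <= C * (1/2)^n) -> a = 0.
Proof.
  intros HC H; destruct (Req_dec a 0) as [|Hne]; auto.
  assert (Hp : 0 < Rabs a) by (apply Rabs_pos_lt; auto).
  destruct (pow_half_lt C (Rabs a) Hp HC) as [N HN].
  specialize (HN N (le_n N)); specialize (H N); lra.
Qed.

Lemma is_lim_seq_of_cauchy_pow_half (a : nat -> R) (C : R) : 0 <= C ->
  (forall n m, (n <= m)%nat -> Rabs (a m - a n) <= C * (1/2)^n) ->
  is_lim_seq a (real (Lim_seq a)).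
Proof.
  intros HC H.
  cut (ex_finite_lim_seq a).
  { intros [l Hl]; rewrite (is_lim_seq_unique _ _ Hl); exact Hl. }
  apply ex_lim_seq_cauchy_corr; intros eps.
  destruct (pow_half_lt C eps (cond_pos eps) HC) as [N HN].
  exists N; intros n m Hn Hm; destruct (Nat.le_ge_cases n m) as [Hnm|Hnm].
  - rewrite Rabs_minus_sym; eapply Rle_lt_trans; [apply H; auto|apply HN; auto].
  - eapply Rle_lt_trans; [apply H; auto|apply HN; auto].
Qed.

Lemma Rabs_between_le (t0 t s : R) : Rmin t0 t <= s <= Rmax t0 t ->
  Rabs (s - t0) <= Rabs (t - t0).
Proof.
  intros Hs; unfold Rmin, Rmax in Hs; destruct (Rle_dec t0 t); unfold Rabs;
    repeat destruct Rcase_abs; lra.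
Qed.

Definition lipschitz (a : R -> R) (K : R) : Prop :=
  forall t s, Rabs (a t - a s) <= K * Rabs (t - s).

Lemma RInt_lipschitz2_comp_diff (phi : R -> R -> R) (L : R) (a1 c1 a0 c0 : R -> R) (t0 t d : R) :
  0 <= L -> lipschitz2 phi L ->
  ex_RInt (fun s => phi (a1 s) (c1 s)) t0 t -> ex_RInt (fun s => phi (a0 s) (c0 s)) t0 t ->
  (forall s, Rmin t0 t <= s <= Rmax t0 t -> Rabs (a1 s - a0 s) + Rabs (c1 s - c0 s) <= d) ->
  Rabs (RInt (fun s => phi (a1 s) (c1 s)) t0 t - RInt (fun s => phi (a0 s) (c0 s)) t0 t)
    <= L * d * Rabs (t - t0).
Proof.
  intros HL Hpl H1 H0 Hd.
  assert (E := RInt_minus _ _ _ _ H1 H0); change (minus ?x ?y) with (x - y) in E.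
  rewrite <- E; apply abs_RInt_le_const_dist.
  - apply (ex_RInt_minus (V := R_NormedModule)); auto.
  - intros s Hs; eapply Rle_trans; [apply Hpl|]; apply Rmult_le_compat_l; auto.
Qed.

(* Picard iteration for the planar system u' = f(u,v), v' = g(u,v); the
   contraction factor 1/2 comes from 2 L h <= 1/2. *)
Section Picard.
Variables (f g : R -> R -> R) (B L h t0 u0 v0 : R).
Hypothesis Hh : 0 < h.
Hypothesis HB : 0 <= B.
Hypothesis HL : 0 <= L.
Hypothesis HLh : L * h <= 1/4.
Hypothesis Hfb : forall a c, Rabs (f a c) <= B.
Hypothesis Hgb : forall a c, Rabs (g a c) <= B.
Hypothesis Hfl : lipschitz2 f L.
Hypothesis Hgl : lipschitz2 g L.

Fixpoint picard_iter (n : nat) : (R -> R) * (R -> R) :=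
  match n with
  | O => (fun _ => u0, fun _ => v0)
  | S n' => let p := picard_iter n' in
      (fun t => u0 + RInt (fun s => f (fst p s) (snd p s)) t0 t,
       fun t => v0 + RInt (fun s => g (fst p s) (snd p s)) t0 t)
  end.

Let pu n := fst (picard_iter n).
Let pv n := snd (picard_iter n).

Lemma picard_step_lipschitz (phi : R -> R -> R) (w0 : R) (a c : R -> R) (K : R) :
  0 <= K -> lipschitz a K -> lipschitz c K ->
  (forall a c, Rabs (phi a c) <= B) -> lipschitz2 phi L ->
  lipschitz (fun t => w0 + RInt (fun s => phi (a s) (c s)) t0 t) B.
Proof.
  intros HK Ha Hc Hpb Hpl t s.
  assert (Hex : forall x y, ex_RInt (fun s => phi (a s) (c s)) x y).
  { intros x y; apply (ex_RInt_continuous (V := R_CompleteNormedModule)); intros r _.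
    apply (continuous_lipschitz2_comp phi L); auto;
      apply (lipschitz_on_ball_continuous _ K r 1); auto; rewrite Rminus_diag, Rabs_R0; lra. }
  rewrite <- (RInt_Chasles _ t0 s t) by auto; change (plus ?x ?y) with (x + y).
  assert (E : forall a b c : R, a + (b + c) - (a + b) = c) by (intros; ring); rewrite E.
  apply abs_RInt_le_const_dist; auto.
Qed.

Lemma picard_lipschitz n : lipschitz (pu n) B /\ lipschitz (pv n) B.
Proof.
  induction n as [|n [IH1 IH2]].
  - split; intros t s; unfold pu, pv; simpl; rewrite Rminus_diag, Rabs_R0;
      apply Rmult_le_pos; auto; apply Rabs_pos.
  - split; [apply (picard_step_lipschitz f u0 _ _ B)|apply (picard_step_lipschitz g v0 _ _ B)]; auto.
Qed.

Lemma picard_comp_ex_RInt (phi : R -> R -> R) n a b :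
  lipschitz2 phi L -> ex_RInt (fun s => phi (pu n s) (pv n s)) a b.
Proof.
  intros Hpl; destruct (picard_lipschitz n) as [H1 H2].
  apply (ex_RInt_continuous (V := R_CompleteNormedModule)); intros r _.
  apply (continuous_lipschitz2_comp _ L); auto;
    apply (lipschitz_on_ball_continuous _ B r 1); auto; rewrite Rminus_diag, Rabs_R0; lra.
Qed.

Lemma picard_increment n t : Rabs (t - t0) <= h ->
  Rabs (pu (S n) t - pu n t) + Rabs (pv (S n) t - pv n t) <= 2 * B * h * (1/2)^n.
Proof.
  revert t; induction n as [|n IH]; intros t Ht.
  - unfold pu, pv; simpl.
    assert (E : forall a b : R, a + b - a = b) by (intros; ring); rewrite !E.
    assert (A1 := abs_RInt_le_const_dist (fun _ => f u0 v0) t0 t B (ex_RInt_const _ _ _) (fun _ _ => Hfb u0 v0)).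
    assert (A2 := abs_RInt_le_const_dist (fun _ => g u0 v0) t0 t B (ex_RInt_const _ _ _) (fun _ _ => Hgb u0 v0)).
    assert (B * Rabs (t - t0) <= B * h) by (apply Rmult_le_compat_l; auto); lra.
  - assert (Hd : forall s, Rmin t0 t <= s <= Rmax t0 t ->
       Rabs (pu (S n) s - pu n s) + Rabs (pv (S n) s - pv n s) <= 2 * B * h * (1/2)^n).
    { intros s Hs; apply IH; eapply Rle_trans; [apply (Rabs_between_le t0 t s)|]; auto. }
    assert (D1 := RInt_lipschitz2_comp_diff f L _ _ _ _ t0 t _ HL Hfl
                    (picard_comp_ex_RInt f (S n) t0 t Hfl) (picard_comp_ex_RInt f n t0 t Hfl) Hd).
    assert (D2 := RInt_lipschitz2_comp_diff g L _ _ _ _ t0 t _ HL Hgl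
                    (picard_comp_ex_RInt g (S n) t0 t Hgl) (picard_comp_ex_RInt g n t0 t Hgl) Hd).
    change (pu (S (S n)) t) with (u0 + RInt (fun s => f (pu (S n) s) (pv (S n) s)) t0 t).
    change (pv (S (S n)) t) with (v0 + RInt (fun s => g (pu (S n) s) (pv (S n) s)) t0 t).
    change (pu (S n) t) with (u0 + RInt (fun s => f (pu n s) (pv n s)) t0 t).
    change (pv (S n) t) with (v0 + RInt (fun s => g (pu n s) (pv n s)) t0 t).
    assert (Hq : 0 <= 2 * B * h * (1/2)^n) by (apply Rmult_le_pos; [nra|apply pow_le; lra]).
    assert (L * (2 * B * h * (1/2)^n) * Rabs (t - t0) <= L * (2 * B * h * (1/2)^n) * h)
      by (apply Rmult_le_compat_l; auto; apply Rmult_le_pos; auto).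
    assert (E : forall a b c : R, a + b - (a + c) = b - c) by (intros; ring); rewrite !E.
    simpl; nra.
Qed.

Lemma picard_cauchy n k t : Rabs (t - t0) <= h ->
  Rabs (pu (n + k)%nat t - pu n t) <= 4 * B * h * ((1/2)^n - (1/2)^(n + k)) /\
  Rabs (pv (n + k)%nat t - pv n t) <= 4 * B * h * ((1/2)^n - (1/2)^(n + k)).
Proof.
  intros Ht; induction k as [|k [IH1 IH2]].
  - rewrite Nat.add_0_r, !Rminus_diag, Rabs_R0; lra.
  - rewrite Nat.add_succ_r; assert (Hd := picard_increment (n + k) t Ht).
    assert (P1 := Rabs_pos (pu (S (n + k)) t - pu (n + k)%nat t)).
    assert (P2 := Rabs_pos (pv (S (n + k)) t - pv (n + k)%nat t)).
    simpl ((1/2)^(S (n + k))).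
    split; [replace (pu (S (n + k)) t - pu n t)
              with ((pu (S (n + k)) t - pu (n + k)%nat t) + (pu (n + k)%nat t - pu n t)) by ring
           |replace (pv (S (n + k)) t - pv n t)
              with ((pv (S (n + k)) t - pv (n + k)%nat t) + (pv (n + k)%nat t - pv n t)) by ring];
      eapply Rle_trans; try apply Rabs_triang; nra.
Qed.

Lemma picard_cauchy_le n k t : (n <= k)%nat -> Rabs (t - t0) <= h ->
  Rabs (pu k t - pu n t) <= 4 * B * h * (1/2)^n /\
  Rabs (pv k t - pv n t) <= 4 * B * h * (1/2)^n.
Proof.
  intros Hnk Ht; replace k with (n + (k - n))%nat by lia.
  destruct (picard_cauchy n (k - n) t Ht) as [H1 H2].
  assert (0 <= (1/2)^(n + (k - n))) by (apply pow_le; lra).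
  assert (0 <= B * h) by nra; split; nra.
Qed.

Definition picard_u (t : R) : R := real (Lim_seq (fun n => pu n t)).
Definition picard_v (t : R) : R := real (Lim_seq (fun n => pv n t)).

Lemma picard_tail n t : Rabs (t - t0) <= h ->
  Rabs (picard_u t - pu n t) <= 4 * B * h * (1/2)^n /\
  Rabs (picard_v t - pv n t) <= 4 * B * h * (1/2)^n.
Proof.
  intros Ht; assert (HC : 0 <= 4 * B * h) by nra.
  assert (Lu : is_lim_seq (fun k => pu k t) (picard_u t)).
  { apply (is_lim_seq_of_cauchy_pow_half _ _ HC); intros; apply picard_cauchy_le; auto. }
  assert (Lv : is_lim_seq (fun k => pv k t) (picard_v t)).
  { apply (is_lim_seq_of_cauchy_pow_half _ _ HC); intros; apply picard_cauchy_le; auto. }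
  split.
  - apply (is_lim_seq_abs_minus_le (fun k => pu (k + n)%nat t) (fun _ => pu n t));
      [apply (is_lim_seq_incr_n (fun k => pu k t) n), Lu|apply is_lim_seq_const|].
    intro k; apply picard_cauchy_le; auto; lia.
  - apply (is_lim_seq_abs_minus_le (fun k => pv (k + n)%nat t) (fun _ => pv n t));
      [apply (is_lim_seq_incr_n (fun k => pv k t) n), Lv|apply is_lim_seq_const|].
    intro k; apply picard_cauchy_le; auto; lia.
Qed.

Lemma picard_lim_lipschitz t s : Rabs (t - t0) <= h -> Rabs (s - t0) <= h ->
  Rabs (picard_u t - picard_u s) <= B * Rabs (t - s) /\
  Rabs (picard_v t - picard_v s) <= B * Rabs (t - s).
Proof.
  intros Ht Hs; assert (HC : 0 <= 4 * B * h) by nra.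
  assert (Hlim : forall r, Rabs (r - t0) <= h ->
    is_lim_seq (fun k => pu k r) (picard_u r) /\ is_lim_seq (fun k => pv k r) (picard_v r)).
  { intros r Hr; split; apply (is_lim_seq_of_cauchy_pow_half _ _ HC);
      intros; apply picard_cauchy_le; auto. }
  destruct (Hlim t Ht) as [Ut Vt], (Hlim s Hs) as [Us Vs].
  split; [apply (is_lim_seq_abs_minus_le _ _ _ _ _ Ut Us)
         |apply (is_lim_seq_abs_minus_le _ _ _ _ _ Vt Vs)];
    intro n; apply picard_lipschitz.
Qed.

Lemma picard_lim_t0 : picard_u t0 = u0 /\ picard_v t0 = v0.
Proof.
  assert (E : forall n, pu n t0 = u0 /\ pv n t0 = v0).
  { intros [|n]; unfold pu, pv; simpl; auto.
    rewrite !RInt_point; change zero with 0; split; ring. }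
  unfold picard_u, picard_v; split.
  - rewrite (Lim_seq_ext _ (fun _ => u0)), Lim_seq_const; [reflexivity|apply E].
  - rewrite (Lim_seq_ext _ (fun _ => v0)), Lim_seq_const; [reflexivity|apply E].
Qed.

Lemma picard_lim_comp_continuous (phi : R -> R -> R) t : lipschitz2 phi L ->
  Rabs (t - t0) < h -> continuous (fun s => phi (picard_u s) (picard_v s)) t.
Proof.
  intros Hpl Ht; apply (continuous_lipschitz2_comp _ L); auto;
    apply (lipschitz_on_ball_continuous _ B t0 h); auto; intros; apply picard_lim_lipschitz; auto.
Qed.

Lemma picard_lim_comp_ex_RInt (phi : R -> R -> R) t : lipschitz2 phi L ->
  Rabs (t - t0) < h -> ex_RInt (fun s => phi (picard_u s) (picard_v s)) t0 t.
Proof.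
  intros Hpl Ht; apply (ex_RInt_continuous (V := R_CompleteNormedModule)); intros s Hs.
  apply picard_lim_comp_continuous; auto.
  eapply Rle_lt_trans; [apply (Rabs_between_le t0 t s)|]; auto.
Qed.

(* Passing to the limit in [w (n+1) = w0 + RInt phi (pu n, pv n)], one component at a time. *)
Lemma picard_lim_fixed_comp (phi : R -> R -> R) (w0 : R) (wn : nat -> R -> R) (wl : R -> R) t :
  lipschitz2 phi L -> Rabs (t - t0) < h ->
  (forall n, wn (S n) t = w0 + RInt (fun s => phi (pu n s) (pv n s)) t0 t) ->
  (forall n, Rabs (wl t - wn n t) <= 4 * B * h * (1/2)^n) ->
  wl t = w0 + RInt (fun s => phi (picard_u s) (picard_v s)) t0 t.
Proof.
  intros Hpl Ht Hstep Htail.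
  assert (Hd : forall n s, Rmin t0 t <= s <= Rmax t0 t ->
     Rabs (picard_u s - pu n s) + Rabs (picard_v s - pv n s) <= 8 * B * h * (1/2)^n).
  { intros n s Hs.
    assert (Rabs (s - t0) <= h) by (eapply Rle_trans; [apply (Rabs_between_le t0 t s)|]; auto; lra).
    destruct (picard_tail n s H); lra. }
  apply Rminus_diag_uniq, (eq_0_of_le_pow_half _ (2 * B * h + L * (8 * B * h) * h)).
  { assert (0 <= B * h) by nra; assert (0 <= L * (8 * B * h) * h) by (apply Rmult_le_pos; nra); lra. }
  intro n.
  assert (D := RInt_lipschitz2_comp_diff phi L _ _ _ _ t0 t _ HL Hpl
                 (picard_lim_comp_ex_RInt phi t Hpl Ht) (picard_comp_ex_RInt phi n t0 t Hpl) (Hd n)).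
  assert (T1 := Htail (S n)); rewrite Hstep in T1; simpl ((1/2)^(S n)) in T1.
  replace (wl t - (w0 + RInt (fun s => phi (picard_u s) (picard_v s)) t0 t))
    with ((wl t - (w0 + RInt (fun s => phi (pu n s) (pv n s)) t0 t))
          - (RInt (fun s => phi (picard_u s) (picard_v s)) t0 t
             - RInt (fun s => phi (pu n s) (pv n s)) t0 t)) by ring.
  eapply Rle_trans; [apply Rabs_minus_le|].
  assert (Hq := pow_le (1/2) n ltac:(lra)); assert (0 <= B * h) by nra.
  assert (L * (8 * B * h * (1/2)^n) * Rabs (t - t0) <= L * (8 * B * h * (1/2)^n) * h)
    by (apply Rmult_le_compat_l; [apply Rmult_le_pos; nra|lra]).
  nra.
Qed.

Lemma picard_lim_is_derive t : Rabs (t - t0) < h ->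
  is_derive picard_u t (f (picard_u t) (picard_v t)) /\
  is_derive picard_v t (g (picard_u t) (picard_v t)).
Proof.
  intros Ht; assert (Hr : 0 < h - Rabs (t - t0)) by lra.
  assert (Hin : locally t (fun s => Rabs (s - t0) < h)).
  { exists (mkposreal _ Hr); intros s Hs; change (Rabs (s - t) < h - Rabs (t - t0)) in Hs.
    replace (s - t0) with ((s - t) + (t - t0)) by ring.
    eapply Rle_lt_trans; [apply Rabs_triang|]; lra. }
  split.
  - apply (is_derive_of_RInt_eq _ (fun s => f (picard_u s) (picard_v s)) u0 t0);
      [|apply picard_lim_comp_continuous; auto].
    apply (filter_imp _ _ (fun s Hs => conj
      (picard_lim_fixed_comp f u0 pu picard_u s Hfl Hs (fun n => eq_refl)
         (fun n => proj1 (picard_tail n s (Rlt_le _ _ Hs))))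
      (picard_lim_comp_ex_RInt f s Hfl Hs)) Hin).
  - apply (is_derive_of_RInt_eq _ (fun s => g (picard_u s) (picard_v s)) v0 t0);
      [|apply picard_lim_comp_continuous; auto].
    apply (filter_imp _ _ (fun s Hs => conj
      (picard_lim_fixed_comp g v0 pv picard_v s Hgl Hs (fun n => eq_refl)
         (fun n => proj2 (picard_tail n s (Rlt_le _ _ Hs))))
      (picard_lim_comp_ex_RInt g s Hgl Hs)) Hin).
Qed.

End Picard.

Lemma picard_existence (f g : R -> R -> R) (B L h t0 u0 v0 : R) :
  0 < h -> 0 <= B -> 0 <= L -> L * h <= 1/4 ->
  (forall a c, Rabs (f a c) <= B) -> (forall a c, Rabs (g a c) <= B) ->
  lipschitz2 f L -> lipschitz2 g L ->
  exists u v : R -> R,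
    (forall t, Rabs (t - t0) < h -> is_derive u t (f (u t) (v t)) /\ is_derive v t (g (u t) (v t))) /\
    (forall t, Rabs (t - t0) <= h ->
       Rabs (u t - u0) <= B * Rabs (t - t0) /\ Rabs (v t - v0) <= B * Rabs (t - t0)).
Proof.
  intros Hh HB HL HLh Hfb Hgb Hfl Hgl.
  exists (picard_u f g t0 u0 v0), (picard_v f g t0 u0 v0); split.
  - intros t Ht; apply (picard_lim_is_derive f g B L h); auto.
  - intros t Ht; destruct (picard_lim_t0 f g t0 u0 v0) as [E1 E2].
    assert (Ht0 : Rabs (t0 - t0) <= h) by (rewrite Rminus_diag, Rabs_R0; lra).
    destruct (picard_lim_lipschitz f g B L h t0 u0 v0 Hh HB HL HLh Hfb Hgb Hfl Hgl t t0 Ht Ht0).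
    rewrite E1, E2 in *; auto.
Qed.

Definition clip (R0 a : R) : R := Rmax (- R0) (Rmin R0 a).

Lemma clip_bound (R0 a : R) : 0 <= R0 -> Rabs (clip R0 a) <= R0.
Proof.
  intros; unfold clip, Rmax, Rmin; repeat destruct Rle_dec; unfold Rabs; destruct Rcase_abs; lra.
Qed.

Lemma clip_1_lipschitz (R0 a a' : R) : 0 <= R0 -> Rabs (clip R0 a - clip R0 a') <= Rabs (a - a').
Proof.
  intros; unfold clip, Rmax, Rmin; repeat destruct Rle_dec; unfold Rabs; repeat destruct Rcase_abs; lra.
Qed.

Lemma clip_id (R0 a : R) : Rabs a <= R0 -> clip R0 a = a.
Proof.
  intros H; unfold clip, Rmax, Rmin; unfold Rabs in H; destruct Rcase_abs in H;
    repeat destruct Rle_dec; lra.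
Qed.

Section PlaneField.
Variables (N m sigma p R0 : R).
Hypothesis HR : 0 <= R0.

Let k := (p - m) / (sigma + 2).

Definition box_const : R := 3 + Rabs (N - 2) + (Rabs (m - 1) + 2 * Rabs m + Rabs k) * R0.

Lemma box_const_ge1 : 1 <= box_const.
Proof.
  unfold box_const; assert (H1 := Rabs_pos (m - 1)); assert (H2 := Rabs_pos m).
  assert (H3 := Rabs_pos k); assert (H4 := Rabs_pos (N - 2)).
  assert (0 <= (Rabs (m - 1) + 2 * Rabs m + Rabs k) * R0) by (apply Rmult_le_pos; lra).
  lra.
Qed.

Lemma S2_f_box_bound a c : Rabs a <= R0 -> Rabs c <= R0 -> Rabs (S2_f m a c) <= box_const * R0.
Proof.
  intros Ha Hc; unfold S2_f, box_const.
  assert (Rabs (2 - (m - 1) * c) <= 2 + Rabs (m - 1) * R0).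
  { eapply Rle_trans; [apply Rabs_minus_le|]; rewrite (Rabs_right 2) by lra.
    assert (Rabs ((m - 1) * c) <= Rabs (m - 1) * R0) by (apply Rabs_mult_le; lra); lra. }
  eapply Rle_trans; [apply Rabs_mult_le; eauto|]; rewrite Rmult_comm.
  apply Rmult_le_compat_r; auto.
  assert (H2 := Rabs_pos m); assert (H3 := Rabs_pos k); assert (H4 := Rabs_pos (N - 2)).
  assert (0 <= (2 * Rabs m + Rabs k) * R0) by (apply Rmult_le_pos; lra); nra.
Qed.

Lemma S2_g_plane_box_bound a c : Rabs a <= R0 -> Rabs c <= R0 ->
  Rabs (S2_g N m sigma p a c 0) <= box_const * R0.
Proof.
  intros Ha Hc; unfold S2_g, box_const; fold k.
  assert (A1 : Rabs ((N - 2) * c) <= Rabs (N - 2) * R0) by (apply Rabs_mult_le; lra).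
  assert (A2 : Rabs (m * c ^ 2) <= Rabs m * (R0 * R0))
    by (apply Rabs_mult_le; [lra|]; simpl; rewrite Rmult_1_r; apply Rabs_mult_le; auto).
  assert (A3 : Rabs (k * a * c) <= Rabs k * R0 * R0) by (apply Rabs_mult_le; [apply Rabs_mult_le|]; lra).
  replace (- a - (N - 2) * c + 0 - m * c ^ 2 - k * a * c)
    with (- a - (N - 2) * c - m * c ^ 2 - k * a * c) by ring.
  eapply Rle_trans; [apply Rabs_minus_le|].
  eapply Rle_trans; [apply Rplus_le_compat_r, Rabs_minus_le|].
  eapply Rle_trans; [apply Rplus_le_compat_r, Rplus_le_compat_r, Rabs_minus_le|].
  rewrite Rabs_Ropp.
  assert (H1 := Rabs_pos (m - 1)); assert (H2 := Rabs_pos m); assert (H3 := Rabs_pos k).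
  assert (H4 := Rabs_pos (N - 2)).
  assert (0 <= Rabs (m - 1) * R0 * R0) by (apply Rmult_le_pos; [apply Rmult_le_pos|]; lra).
  nra.
Qed.

Lemma S2_f_box_lipschitz a c a' c' :
  Rabs a <= R0 -> Rabs c <= R0 -> Rabs a' <= R0 -> Rabs c' <= R0 ->
  Rabs (S2_f m a c - S2_f m a' c') <= box_const * (Rabs (a - a') + Rabs (c - c')).
Proof.
  intros Ha Hc Ha' Hc'; unfold S2_f, box_const.
  replace (a * (2 - (m - 1) * c) - a' * (2 - (m - 1) * c'))
    with (2 * (a - a') - (m - 1) * (a * (c - c') + c' * (a - a'))) by ring.
  eapply Rle_trans; [apply Rabs_minus_le|].
  assert (A1 : Rabs (2 * (a - a')) <= 2 * Rabs (a - a')) by (rewrite Rabs_mult, Rabs_right; lra).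
  assert (A2 : Rabs (a * (c - c') + c' * (a - a')) <= R0 * Rabs (c - c') + R0 * Rabs (a - a'))
    by (eapply Rle_trans; [apply Rabs_triang|]; apply Rplus_le_compat; apply Rabs_mult_le; lra).
  assert (A3 : Rabs ((m - 1) * (a * (c - c') + c' * (a - a')))
               <= Rabs (m - 1) * (R0 * Rabs (c - c') + R0 * Rabs (a - a')))
    by (apply Rabs_mult_le; lra).
  assert (H1 := Rabs_pos (m - 1)); assert (H2 := Rabs_pos m); assert (H3 := Rabs_pos k).
  assert (H4 := Rabs_pos (N - 2)); assert (H5 := Rabs_pos (a - a')); assert (H6 := Rabs_pos (c - c')).
  assert (0 <= (2 * Rabs m + Rabs k) * R0 * (Rabs (a - a') + Rabs (c - c')))
    by (apply Rmult_le_pos; [apply Rmult_le_pos|]; lra).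
  assert (0 <= Rabs (m - 1) * R0) by (apply Rmult_le_pos; lra).
  nra.
Qed.

Lemma S2_g_plane_box_lipschitz a c a' c' :
  Rabs a <= R0 -> Rabs c <= R0 -> Rabs a' <= R0 -> Rabs c' <= R0 ->
  Rabs (S2_g N m sigma p a c 0 - S2_g N m sigma p a' c' 0)
    <= box_const * (Rabs (a - a') + Rabs (c - c')).
Proof.
  intros Ha Hc Ha' Hc'; unfold S2_g, box_const; fold k.
  replace (- a - (N - 2) * c + 0 - m * c ^ 2 - k * a * c
           - (- a' - (N - 2) * c' + 0 - m * c' ^ 2 - k * a' * c'))
    with (- (a - a') - (N - 2) * (c - c') - m * ((c + c') * (c - c'))
          - k * (a * (c - c') + c' * (a - a'))) by ring.
  assert (A1 : Rabs ((N - 2) * (c - c')) <= Rabs (N - 2) * Rabs (c - c')) by (apply Rabs_mult_le; lra).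
  assert (Hcc : Rabs (c + c') <= 2 * R0) by (eapply Rle_trans; [apply Rabs_triang|]; lra).
  assert (A2 : Rabs (m * ((c + c') * (c - c'))) <= Rabs m * (2 * R0 * Rabs (c - c')))
    by (apply Rabs_mult_le; [|apply Rabs_mult_le]; lra).
  assert (A3 : Rabs (a * (c - c') + c' * (a - a')) <= R0 * Rabs (c - c') + R0 * Rabs (a - a'))
    by (eapply Rle_trans; [apply Rabs_triang|]; apply Rplus_le_compat; apply Rabs_mult_le; lra).
  assert (A4 : Rabs (k * (a * (c - c') + c' * (a - a')))
               <= Rabs k * (R0 * Rabs (c - c') + R0 * Rabs (a - a')))
    by (apply Rabs_mult_le; lra).
  eapply Rle_trans; [apply Rabs_minus_le|].
  eapply Rle_trans; [apply Rplus_le_compat_r, Rabs_minus_le|].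
  eapply Rle_trans; [apply Rplus_le_compat_r, Rplus_le_compat_r, Rabs_minus_le|].
  rewrite Rabs_Ropp.
  assert (H1 := Rabs_pos (m - 1)); assert (H2 := Rabs_pos m); assert (H3 := Rabs_pos k).
  assert (H4 := Rabs_pos (N - 2)); assert (H5 := Rabs_pos (a - a')); assert (H6 := Rabs_pos (c - c')).
  assert (0 <= Rabs (m - 1) * R0 * (Rabs (a - a') + Rabs (c - c')))
    by (apply Rmult_le_pos; [apply Rmult_le_pos|]; lra).
  assert (0 <= Rabs k * R0 * Rabs (c - c')) by (apply Rmult_le_pos; [apply Rmult_le_pos|]; lra).
  assert (0 <= Rabs k * R0 * Rabs (a - a')) by (apply Rmult_le_pos; [apply Rmult_le_pos|]; lra).
  assert (0 <= Rabs m * R0 * Rabs (c - c')) by (apply Rmult_le_pos; [apply Rmult_le_pos|]; lra).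
  assert (0 <= Rabs m * R0 * Rabs (a - a')) by (apply Rmult_le_pos; [apply Rmult_le_pos|]; lra).
  nra.
Qed.

Definition S2_f_clip (a c : R) : R := S2_f m (clip R0 a) (clip R0 c).
Definition S2_g_clip (a c : R) : R := S2_g N m sigma p (clip R0 a) (clip R0 c) 0.

Lemma S2_f_clip_bound a c : Rabs (S2_f_clip a c) <= box_const * R0.
Proof. apply S2_f_box_bound; apply clip_bound; auto. Qed.

Lemma S2_g_clip_bound a c : Rabs (S2_g_clip a c) <= box_const * R0.
Proof. apply S2_g_plane_box_bound; apply clip_bound; auto. Qed.

Lemma S2_f_clip_lipschitz : lipschitz2 S2_f_clip box_const.
Proof.
  intros a c a' c'; eapply Rle_trans; [apply S2_f_box_lipschitz; apply clip_bound; auto|].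
  assert (H := box_const_ge1); apply Rmult_le_compat_l; [lra|].
  apply Rplus_le_compat; apply clip_1_lipschitz; auto.
Qed.

Lemma S2_g_clip_lipschitz : lipschitz2 S2_g_clip box_const.
Proof.
  intros a c a' c'; eapply Rle_trans; [apply S2_g_plane_box_lipschitz; apply clip_bound; auto|].
  assert (H := box_const_ge1); apply Rmult_le_compat_l; [lra|].
  apply Rplus_le_compat; apply clip_1_lipschitz; auto.
Qed.

End PlaneField.

Lemma cross_le_sum_sq (a c d1 d2 K : R) : 0 <= K ->
  Rabs d1 <= K * (Rabs a + Rabs c) -> Rabs d2 <= K * (Rabs a + Rabs c) ->
  2 * a * d1 + 2 * c * d2 <= 4 * K * (a^2 + c^2).
Proof.
  intros HK H1 H2.
  assert (E1 : a * d1 <= Rabs a * Rabs d1) by (rewrite <- Rabs_mult; apply Rle_abs).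
  assert (E2 : c * d2 <= Rabs c * Rabs d2) by (rewrite <- Rabs_mult; apply Rle_abs).
  assert (P1 := Rabs_pos a); assert (P2 := Rabs_pos c).
  assert (F1 : Rabs a * Rabs d1 <= Rabs a * (K * (Rabs a + Rabs c))) by (apply Rmult_le_compat_l; auto).
  assert (F2 : Rabs c * Rabs d2 <= Rabs c * (K * (Rabs a + Rabs c))) by (apply Rmult_le_compat_l; auto).
  rewrite <- (pow2_abs a), <- (pow2_abs c).
  assert (0 <= K * (Rabs a - Rabs c)^2) by (apply Rmult_le_pos; [lra|apply pow2_ge_0]).
  nra.
Qed.

(* Gronwall: [((x-u)^2 + (y-v)^2) exp(-4Kt)] is nonincreasing. *)
Lemma gronwall_planar_uniqueness (x y u v dx dy du dv : R -> R) (K a s : R) :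
  0 <= K -> a <= s ->
  (forall t, a <= t <= s -> is_derive x t (dx t) /\ is_derive y t (dy t) /\
                            is_derive u t (du t) /\ is_derive v t (dv t)) ->
  (forall t, a <= t <= s ->
     Rabs (dx t - du t) <= K * (Rabs (x t - u t) + Rabs (y t - v t)) /\
     Rabs (dy t - dv t) <= K * (Rabs (x t - u t) + Rabs (y t - v t))) ->
  x a = u a -> y a = v a -> x s = u s /\ y s = v s.
Proof.
  intros HK Has Hd Hb Hx Hy.
  set (phi := fun t => ((x t - u t)^2 + (y t - v t)^2) * exp (-(4 * K) * t)).
  assert (Hphi : phi s <= phi a).
  { apply (is_derive_nonpos_le phi (fun t =>
        (2 * (x t - u t) * (dx t - du t) + 2 * (y t - v t) * (dy t - dv t)) * exp (-(4 * K) * t)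
        + ((x t - u t)^2 + (y t - v t)^2) * (-(4 * K) * exp (-(4 * K) * t)))); auto.
    - intros t Ht; destruct (Hd t Ht) as [D1 [D2 [D3 D4]]]; unfold phi.
      auto_derive; [close_ex_derive|].
      rewrite_Derive D1; rewrite_Derive D2; rewrite_Derive D3; rewrite_Derive D4; ring.
    - intros t Ht; destruct (Hb t (conj (Rlt_le _ _ (proj1 Ht)) (Rlt_le _ _ (proj2 Ht)))) as [B1 B2].
      assert (He := exp_pos (-(4 * K) * t)).
      assert (G := cross_le_sum_sq (x t - u t) (y t - v t) _ _ K HK B1 B2); nra. }
  unfold phi in Hphi; rewrite Hx, Hy, !Rminus_diag in Hphi.
  assert (He := exp_pos (-(4 * K) * s)).
  assert (Q1 := pow2_ge_0 (x s - u s)); assert (Q2 := pow2_ge_0 (y s - v s)).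
  assert (Z : (x s - u s)^2 + (y s - v s)^2 <= 0) by (simpl in Hphi; nra).
  simpl in Q1, Q2, Z; split; nra.
Qed.

Section PlaneSolutions.
Variables (N m sigma p : R).

Definition S2_plane_sol_at (u v : R -> R) (t : R) : Prop :=
  is_derive u t (S2_f m (u t) (v t)) /\ is_derive v t (S2_g N m sigma p (u t) (v t) 0).

(* Picard for the field clipped to the box of radius |M| + 1; the solution
   stays in that box, where clipping is the identity. *)
Lemma S2_plane_local_existence (M : R) : exists h, 0 < h /\
  forall t0 a0 c0, Rabs a0 <= M -> Rabs c0 <= M ->
  exists u v : R -> R, u t0 = a0 /\ v t0 = c0 /\
    forall t, Rabs (t - t0) < h ->
      Rabs (u t) <= Rabs M + 1 /\ Rabs (v t) <= Rabs M + 1 /\ S2_plane_sol_at u v t.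
Proof.
  set (R0 := Rabs M + 1); assert (HR0 : 1 <= R0) by (assert (H := Rabs_pos M); unfold R0; lra).
  set (K := box_const N m sigma p R0).
  assert (HK : 1 <= K) by (apply box_const_ge1; lra).
  set (B := K * R0); assert (HB : 1 <= B) by (unfold B; nra).
  set (h := Rmin (1 / (4 * K)) (1 / B)).
  assert (Hh : 0 < h) by (apply Rmin_pos; apply Rdiv_lt_0_compat; lra).
  assert (HKh : K * h <= 1/4).
  { assert (K * h <= K * (1 / (4 * K))) by (apply Rmult_le_compat_l; [lra|apply Rmin_l]).
    replace (K * (1 / (4 * K))) with (1/4) in H by (field; lra); exact H. }
  assert (HBh : B * h <= 1).
  { assert (B * h <= B * (1 / B)) by (apply Rmult_le_compat_l; [lra|apply Rmin_r]).
    replace (B * (1 / B)) with 1 in H by (field; lra); exact H. }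
  exists h; split; auto; intros t0 a0 c0 Ha0 Hc0.
  destruct (picard_existence (S2_f_clip m R0) (S2_g_clip N m sigma p R0) B K h t0 a0 c0)
    as [u [v [Huv Hbd]]]; try lra;
    try (intros; apply S2_f_clip_bound || apply S2_g_clip_bound; lra);
    try (apply S2_f_clip_lipschitz || apply S2_g_clip_lipschitz; lra).
  assert (Hbox : forall t, Rabs (t - t0) <= h -> Rabs (u t) <= R0 /\ Rabs (v t) <= R0).
  { intros t Ht; destruct (Hbd t Ht) as [U V].
    assert (B * Rabs (t - t0) <= B * h) by (apply Rmult_le_compat_l; lra).
    assert (M <= Rabs M) by apply Rle_abs.
    replace (u t) with ((u t - a0) + a0) by ring; replace (v t) with ((v t - c0) + c0) by ring.
    split; eapply Rle_trans; try apply Rabs_triang; unfold R0; lra. }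
  destruct (Hbd t0) as [U0 V0]; [rewrite Rminus_diag, Rabs_R0; lra|].
  rewrite Rminus_diag, Rabs_R0, Rmult_0_r in U0, V0.
  exists u, v; split; [|split].
  - apply Rminus_diag_uniq, Rabs_eq_0, Rle_antisym; auto; apply Rabs_pos.
  - apply Rminus_diag_uniq, Rabs_eq_0, Rle_antisym; auto; apply Rabs_pos.
  - intros t Ht; destruct (Hbox t (Rlt_le _ _ Ht)) as [Ub Vb]; destruct (Huv t Ht) as [Du Dv].
    unfold S2_f_clip, S2_g_clip in Du, Dv; rewrite !clip_id in Du, Dv by auto.
    split; [|split]; [exact Ub|exact Vb|split; assumption].
Qed.

Lemma S2_plane_unique (R0 a s : R) (x y u v : R -> R) : 0 <= R0 -> a <= s ->
  (forall t, a <= t <= s ->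
     Rabs (x t) <= R0 /\ Rabs (y t) <= R0 /\ Rabs (u t) <= R0 /\ Rabs (v t) <= R0 /\
     S2_plane_sol_at x y t /\ S2_plane_sol_at u v t) ->
  x a = u a -> y a = v a -> x s = u s /\ y s = v s.
Proof.
  intros HR Has H.
  apply (gronwall_planar_uniqueness x y u v
           (fun t => S2_f m (x t) (y t)) (fun t => S2_g N m sigma p (x t) (y t) 0)
           (fun t => S2_f m (u t) (v t)) (fun t => S2_g N m sigma p (u t) (v t) 0)
           (box_const N m sigma p R0)); auto.
  - assert (H1 := box_const_ge1 N m sigma p R0 HR); lra.
  - intros t Ht; destruct (H t Ht) as [_ [_ [_ [_ [[D1 D2] [D3 D4]]]]]]; auto.
  - intros t Ht; destruct (H t Ht) as [Hx [Hy [Hu [Hv _]]]].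
    split; [apply S2_f_box_lipschitz|apply S2_g_plane_box_lipschitz]; auto.
Qed.

Lemma S2_sol_glue (b t0 h : R) (x y z u v : R -> R) : t0 < b < t0 + h ->
  S2_sol N m sigma p (Finite b) x y z -> (forall t, t < b -> z t = 0) ->
  (forall t, Rabs (t - t0) < h -> S2_plane_sol_at u v t) ->
  (forall t, t0 <= t < b -> x t = u t /\ y t = v t) ->
  S2_sol N m sigma p (Finite (t0 + h))
    (fun t => if Rlt_dec t b then x t else u t) (fun t => if Rlt_dec t b then y t else v t)
    (fun _ => 0).
Proof.
  intros Hb Hsol Hz Huv Hagree t Ht; simpl in Ht.
  assert (Hz0 : forall c, is_derive (fun _ : R => 0) t (S2_h m sigma p c 0)).
  { intros c; replace (S2_h m sigma p c 0) with 0 by (unfold S2_h; ring).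
    apply (is_derive_const (K := R_AbsRing) (V := R_NormedModule)). }
  destruct (Rlt_dec t b) as [Htb|Htb].
  - assert (Hloc : locally t (fun s => x s = (if Rlt_dec s b then x s else u s) /\
                                       y s = (if Rlt_dec s b then y s else v s))).
    { exists (mkposreal (b - t) ltac:(lra)); intros s Hs.
      change (Rabs (s - t) < b - t) in Hs.
      destruct (Rlt_dec s b); [auto|unfold Rabs in Hs; destruct Rcase_abs in Hs; lra]. }
    destruct (Hsol t Htb) as [D1 [D2 _]]; rewrite (Hz t Htb) in D2.
    split; [|split; auto].
    + apply (is_derive_ext_loc x); auto; apply (filter_imp _ _ (fun s Hs => proj1 Hs) Hloc).
    + apply (is_derive_ext_loc y); auto; apply (filter_imp _ _ (fun s Hs => proj2 Hs) Hloc).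
  - assert (Htt : Rabs (t - t0) < h) by (unfold Rabs; destruct Rcase_abs; lra).
    assert (Hloc : locally t (fun s => u s = (if Rlt_dec s b then x s else u s) /\
                                       v s = (if Rlt_dec s b then y s else v s))).
    { exists (mkposreal (t - t0) ltac:(lra)); intros s Hs.
      change (Rabs (s - t) < t - t0) in Hs.
      assert (t0 < s) by (unfold Rabs in Hs; destruct Rcase_abs in Hs; lra).
      destruct (Rlt_dec s b); [|auto].
      destruct (Hagree s); [lra|auto]. }
    destruct (Huv t Htt) as [D1 D2].
    split; [|split; auto].
    + apply (is_derive_ext_loc u); auto; apply (filter_imp _ _ (fun s Hs => proj1 Hs) Hloc).
    + apply (is_derive_ext_loc v); auto; apply (filter_imp _ _ (fun s Hs => proj2 Hs) Hloc).
Qed.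

(* A maximal planar solution cannot stay bounded up to a finite end [b]:
   it would extend past [b] by local existence and uniqueness. *)
Lemma S2_plane_blowup (b M t1 : R) (x y z : R -> R) :
  S2_sol N m sigma p (Finite b) x y z -> S2_maximal N m sigma p (Finite b) x y z ->
  (forall t, t < b -> z t = 0) -> t1 < b ->
  (forall t, t1 < t < b -> Rabs (x t) <= M /\ Rabs (y t) <= M) -> False.
Proof.
  intros Hsol Hmax Hz Ht1 Hbd.
  destruct (S2_plane_local_existence M) as [h [Hh Hloc]].
  set (t0 := Rmax (b - h / 2) ((t1 + b) / 2)).
  assert (Ht0 : t1 < t0 < b /\ b < t0 + h)
    by (unfold t0, Rmax; destruct Rle_dec; repeat split; lra).
  destruct (Hbd t0) as [Bx By]; [lra|].
  destruct (Hloc t0 (x t0) (y t0) Bx By) as [u [v [Hu0 [Hv0 Huv]]]].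
  assert (HM : M <= Rabs M) by apply Rle_abs; assert (HMp := Rabs_pos M).
  assert (Hagree : forall s, t0 <= s < b -> x s = u s /\ y s = v s).
  { intros s Hs; apply (S2_plane_unique (Rabs M + 1) t0 s x y u v); try lra.
    intros t Ht; destruct (Hbd t) as [Xb Yb]; [lra|].
    assert (Htt : Rabs (t - t0) < h) by (unfold Rabs; destruct Rcase_abs; lra).
    destruct (Huv t Htt) as [Ub [Vb Duv]].
    destruct (Hsol t ltac:(simpl; lra)) as [D1 [D2 _]]; rewrite (Hz t ltac:(lra)) in D2.
    split; [|split; [|split; [|split; [|split]]]]; try lra; [split; assumption|exact Duv]. }
  apply (Hmax (Finite (t0 + h)) _ _ _ ltac:(simpl; lra)
           (S2_sol_glue b t0 h x y z u v ltac:(lra) Hsol Hz (fun t Ht => proj2 (proj2 (Huv t Ht))) Hagree)).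
  intros t Ht; simpl in Ht; destruct (Rlt_dec t b); [|lra].
  split; [|split]; [reflexivity|reflexivity|symmetry; apply Hz; exact Ht].
Qed.

End PlaneSolutions.

Lemma Rbar_lt_down (T : Rbar) (t s : R) : Rbar_lt t T -> s <= t -> Rbar_lt s T.
Proof. intros H Hs; destruct T; simpl in *; try contradiction; auto; lra. Qed.

Lemma Rbar_lt_locally (T : Rbar) (t : R) : Rbar_lt t T -> locally t (fun s => Rbar_lt s T).
Proof.
  intros H; destruct T as [b| |]; simpl in H; try contradiction.
  - exists (mkposreal (b - t) ltac:(lra)); intros s Hs.
    change (Rabs (s - t) < b - t) in Hs; simpl.
    unfold Rabs in Hs; destruct Rcase_abs in Hs; lra.
  - exists (mkposreal 1 ltac:(lra)); intros; simpl; auto.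
Qed.

Lemma is_lim_minfty_eps (f : R -> R) (l : R) : is_lim f m_infty l ->
  forall eps, 0 < eps -> exists M, forall s, s < M -> Rabs (f s - l) < eps.
Proof.
  intros H eps He; apply is_lim_spec in H; destruct (H (mkposreal eps He)) as [M HM].
  exists M; intros s Hs; apply HM; auto.
Qed.

Lemma filterlim_pinfty_of_eps (f : R -> R) (l : R) :
  (forall eps, 0 < eps -> exists M, forall t, M < t -> Rabs (f t - l) < eps) ->
  filterlim f (Rbar_locally p_infty) (locally l).
Proof.
  intros H; apply filterlim_locally; intro eps; destruct (H eps (cond_pos eps)) as [M HM].
  exists M; intros t Ht; apply HM; auto.
Qed.

Lemma filterlim_at_left_of_eps (f : R -> R) (b l : R) :
  (forall eps, 0 < eps -> exists s, s < b /\ forall t, s < t < b -> Rabs (f t - l) < eps) ->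
  filterlim f (at_left b) (locally l).
Proof.
  intros H; apply filterlim_locally; intro eps; destruct (H eps (cond_pos eps)) as [s [Hs HM]].
  exists (mkposreal (b - s) ltac:(lra)); intros t Ht Htb.
  change (Rabs (t - b) < b - s) in Ht; apply HM.
  unfold Rabs in Ht; destruct Rcase_abs in Ht; lra.
Qed.

Lemma filterlim_at_left_minfty_of_bound (f : R -> R) (b : R) :
  (forall K, exists s, s < b /\ forall t, s < t < b -> f t < K) ->
  filterlim f (at_left b) (Rbar_locally m_infty).
Proof.
  intros H P [M HM]; destruct (H M) as [s [Hs HK]].
  exists (mkposreal (b - s) ltac:(lra)); intros t Ht Htb.
  change (Rabs (t - b) < b - s) in Ht; apply HM, HK.
  unfold Rabs in Ht; destruct Rcase_abs in Ht; lra.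
Qed.

Lemma integrating_factor (T : Rbar) (a : R -> R) (t1 : R) : Rbar_lt t1 T ->
  (forall t : R, Rbar_lt t T -> continuous a t) ->
  exists G : R -> R, forall t : R, Rbar_lt t T -> 0 < G t /\ is_derive G t (a t * G t).
Proof.
  intros Ht1 Hc; exists (fun t => exp (RInt a t1 t)); intros t Ht; split; [apply exp_pos|].
  assert (Hex : forall s : R, Rbar_lt s T -> ex_RInt a t1 s).
  { intros s Hs; apply (ex_RInt_continuous (V := R_CompleteNormedModule)); intros r Hr; apply Hc.
    apply (Rbar_lt_down T (Rmax t1 s)); [unfold Rmax; destruct Rle_dec; auto|lra]. }
  assert (HR : is_derive (fun s => RInt a t1 s) t (a t)).
  { apply (is_derive_of_RInt_eq _ a 0 t1); [|apply Hc; auto].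
    apply (filter_imp _ _ (fun s Hs => conj (eq_sym (Rplus_0_l _)) (Hex s Hs)) (Rbar_lt_locally T t Ht)). }
  apply (is_derive_eq_value _ _ _ _ (is_derive_comp exp _ t _ _ (is_derive_exp _) HR)).
  simpl; unfold scal; simpl; unfold mult; simpl; ring.
Qed.

Lemma is_derive_mult_integrating_factor (w a F G : R -> R) (t : R) :
  is_derive w t (- a t * w t + F t) -> is_derive G t (a t * G t) ->
  is_derive (fun u => w u * G u) t (F t * G t).
Proof.
  intros Hw HG.
  apply (is_derive_eq_value _ _ _ _ (is_derive_mult _ _ _ _ _ Hw HG (fun a b => Rmult_comm a b))).
  simpl; unfold plus, mult; simpl; ring.
Qed.

Lemma linear_ode_pos_before (w a F : R -> R) (t3 : R) :
  (forall u, u < t3 -> is_derive w u (- a u * w u + F u)) ->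
  (forall u, u < t3 -> 0 < a u /\ 0 < F u) ->
  (forall eps, 0 < eps -> exists M, forall s, s < M -> Rabs (w s) < eps) ->
  exists s, s < t3 /\ 0 < w s.
Proof.
  intros Hd Hpos Hlim; apply NNPP; intro Hn.
  assert (Hle : forall s, s < t3 -> w s <= 0)
    by (intros s Hs; apply Rnot_lt_le; intro; apply Hn; exists s; auto).
  (* a nonpositive solution is strictly increasing, so it cannot tend to 0 at -oo *)
  assert (Hinc : forall s1 s2, s1 < s2 < t3 -> w s1 < w s2).
  { intros s1 s2 H; apply (is_derive_pos_lt w (fun u => - a u * w u + F u)); [lra| |].
    - intros u Hu; apply Hd; lra.
    - intros u Hu; destruct (Hpos u ltac:(lra)); assert (w u <= 0) by (apply Hle; lra); nra. }
  assert (Hw1 : w (t3 - 1) < 0)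
    by (assert (w (t3 - 1) < w (t3 - 1/2)) by (apply Hinc; lra);
        assert (w (t3 - 1/2) <= 0) by (apply Hle; lra); lra).
  destruct (Hlim (- w (t3 - 1)) ltac:(lra)) as [M HM].
  set (s0 := Rmin M (t3 - 1) - 1).
  assert (A1 := Rmin_l M (t3 - 1)); assert (A2 := Rmin_r M (t3 - 1)).
  specialize (HM s0 ltac:(unfold s0; lra)).
  assert (w s0 < w (t3 - 1)) by (apply Hinc; unfold s0; lra).
  unfold Rabs in HM; destruct Rcase_abs in HM; lra.
Qed.

Lemma linear_ode_pos_after (T : Rbar) (w a F : R -> R) (s t : R) :
  Rbar_lt t T -> s < t ->
  (forall u : R, Rbar_lt u T -> is_derive w u (- a u * w u + F u)) ->
  (forall u : R, Rbar_lt u T -> continuous a u) ->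
  (forall u, s < u < t -> 0 < F u) -> 0 < w s -> 0 < w t.
Proof.
  intros Ht Hst Hd Ha HF Hws.
  destruct (integrating_factor T a t Ht Ha) as [G HG].
  assert (HD : forall u, u <= t -> Rbar_lt u T) by (intros; apply (Rbar_lt_down T t); auto).
  assert (Hmono : w s * G s < w t * G t).
  { apply (is_derive_pos_lt (fun u => w u * G u) (fun u => F u * G u)); auto.
    - intros u Hu; apply (is_derive_mult_integrating_factor w a); [apply Hd|apply HG]; apply HD; lra.
    - intros u Hu; destruct (HG u (HD u ltac:(lra))); specialize (HF u Hu); nra. }
  destruct (HG s (HD s ltac:(lra))), (HG t Ht); nra.
Qed.

Lemma linear_ode_pos (T : Rbar) (w a F : R -> R) (t2 : R) : Rbar_lt t2 T ->
  (forall t : R, Rbar_lt t T -> is_derive w t (- a t * w t + F t)) ->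
  (forall t : R, Rbar_lt t T -> 0 < F t) ->
  (forall t : R, Rbar_lt t T -> continuous a t) ->
  (forall s, s < t2 -> 0 < a s) ->
  (forall eps, 0 < eps -> exists M, forall s, s < M -> Rabs (w s) < eps) ->
  forall t : R, Rbar_lt t T -> 0 < w t.
Proof.
  intros Ht2 Hd HF Ha Hpos Hlim t Ht.
  assert (HD : forall u, u < Rmin t t2 -> Rbar_lt u T)
    by (intros u Hu; apply (Rbar_lt_down T t); auto; assert (Rmin t t2 <= t) by apply Rmin_l; lra).
  assert (A1 := Rmin_l t t2); assert (A2 := Rmin_r t t2).
  destruct (linear_ode_pos_before w a F (Rmin t t2)) as [s [Hs Hws]].
  - intros u Hu; apply Hd, HD; auto.
  - intros u Hu; split; [apply Hpos; lra|apply HF, HD; auto].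
  - exact Hlim.
  - apply (linear_ode_pos_after T w a F s t); auto; try lra.
    intros u Hu; apply HF, (Rbar_lt_down T t); auto; lra.
Qed.

Lemma linear_ode_zero_before (w a : R -> R) (t2 : R) :
  (forall u, u < t2 -> is_derive w u (- a u * w u)) ->
  (forall u, u < t2 -> 0 < a u) ->
  (forall eps, 0 < eps -> exists M, forall s, s < M -> Rabs (w s) < eps) ->
  forall s, s < t2 -> w s = 0.
Proof.
  intros Hd Hpos Hlim s Hs.
  (* w^2 is nonincreasing and tends to 0 at -oo *)
  assert (Hdec : forall s0, s0 < s -> (w s)^2 <= (w s0)^2).
  { intros s0 Hs0.
    apply (is_derive_nonpos_le (fun u => (w u)^2) (fun u => 2 * w u * (- a u * w u))); [lra| |].
    - intros u Hu; assert (Hw := Hd u ltac:(lra)).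
      auto_derive; [close_ex_derive|rewrite_Derive Hw; ring].
    - intros u Hu; assert (0 < a u) by (apply Hpos; lra).
      assert (0 <= (w u)^2) by apply pow2_ge_0; simpl in *; nra. }
  apply NNPP; intro Hne.
  assert (Hp : 0 < Rabs (w s)) by (apply Rabs_pos_lt; auto).
  destruct (Hlim (Rabs (w s)) Hp) as [M HM].
  set (s0 := Rmin M s - 1).
  assert (A1 := Rmin_l M s); assert (A2 := Rmin_r M s).
  specialize (HM s0 ltac:(unfold s0; lra)); specialize (Hdec s0 ltac:(unfold s0; lra)).
  rewrite <- (pow2_abs (w s)), <- (pow2_abs (w s0)) in Hdec.
  assert (P := Rabs_pos (w s0)); simpl in Hdec; nra.
Qed.

Lemma linear_ode_zero (T : Rbar) (w a : R -> R) (t2 : R) : Rbar_lt t2 T ->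
  (forall t : R, Rbar_lt t T -> is_derive w t (- a t * w t)) ->
  (forall t : R, Rbar_lt t T -> continuous a t) ->
  (forall s, s < t2 -> 0 < a s) ->
  (forall eps, 0 < eps -> exists M, forall s, s < M -> Rabs (w s) < eps) ->
  forall t : R, Rbar_lt t T -> w t = 0.
Proof.
  intros Ht2 Hd Ha Hpos Hlim t Ht.
  set (s := Rmin t t2 - 1).
  assert (A1 := Rmin_l t t2); assert (A2 := Rmin_r t t2).
  assert (HD : forall u, u <= t -> Rbar_lt u T) by (intros; apply (Rbar_lt_down T t); auto).
  assert (Hws : w s = 0).
  { apply (linear_ode_zero_before w a t2); auto; [|unfold s; lra].
    intros u Hu; apply Hd, (Rbar_lt_down T t2); auto; lra. }
  destruct (integrating_factor T a t Ht Ha) as [G HG].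
  assert (E : w t * G t = w s * G s).
  { apply (is_derive_zero_eq (fun u => w u * G u)); [unfold s; lra|].
    intros u Hu; rewrite <- (Rmult_0_l (G u)).
    apply (is_derive_mult_integrating_factor w a (fun _ => 0)); [|apply HG, HD; lra].
    rewrite Rplus_0_r; apply Hd, HD; lra. }
  rewrite Hws, Rmult_0_l in E; destruct (HG t Ht) as [G1 _].
  destruct (Rmult_integral _ _ E); auto; lra.
Qed.

Section TrajectoryL0.
Variables (N : nat) (m sigma p : R) (T : Rbar) (x y z : R -> R).
Hypothesis HN : (3 <= N)%nat.
Hypothesis Hm : 1 < m.
Hypothesis Hsig : 0 < sigma.
Hypothesis Hp : m < p.
Hypothesis Hsol : S2_sol (INR N) m sigma p T x y z.
Hypothesis Hmax : S2_maximal (INR N) m sigma p T x y z.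
Hypothesis Hzx : forall t : R, Rbar_lt t T -> z t = 0 /\ 0 < x t.
Hypothesis Hlx : is_lim x m_infty 0.
Hypothesis Hly : is_lim y m_infty 0.

Let Nr := INR N.
Let k := (p - m) / (sigma + 2).

Lemma Nr_ge3 : 3 <= Nr.
Proof. unfold Nr; replace 3 with (INR 3) by (simpl; ring); apply le_INR; auto. Qed.

Lemma k_pos : 0 < k.
Proof. unfold k; apply Rdiv_lt_0_compat; lra. Qed.

Lemma end_cases : T = p_infty \/ exists b, T = Finite b.
Proof.
  destruct T as [b| |] eqn:HT; eauto; exfalso.
  (* on the empty interval, the zero solution on all of R would extend it *)
  apply (Hmax p_infty (fun _ => 0) (fun _ => 0) (fun _ => 0)); [simpl; auto| |].
  - intros t _; unfold S2_f, S2_g, S2_h.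
    split; [|split]; apply (is_derive_eq_value _ _ 0); try ring;
      apply (is_derive_const (K := R_AbsRing) (V := R_NormedModule)).
  - intros t Ht; simpl in Ht; contradiction.
Qed.

Lemma exists_in_domain : exists t : R, Rbar_lt t T.
Proof. destruct end_cases as [-> | [b ->]]; [exists 0|exists (b - 1)]; simpl; auto; lra. Qed.

Lemma x_pos (t : R) : Rbar_lt t T -> 0 < x t.
Proof. intros Ht; apply (Hzx t Ht). Qed.

Lemma is_derive_x (t : R) : Rbar_lt t T -> is_derive x t (x t * (2 - (m - 1) * y t)).
Proof. intros Ht; apply (Hsol t Ht). Qed.

Lemma is_derive_y (t : R) : Rbar_lt t T ->
  is_derive y t (- x t - (Nr - 2) * y t - m * y t ^ 2 - k * x t * y t).
Proof.
  intros Ht; destruct (Hsol t Ht) as [_ [H _]]; destruct (Hzx t Ht) as [Hz _].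
  unfold S2_g in H; rewrite Hz in H; apply (is_derive_eq_value _ _ _ _ H); unfold Nr, k; ring.
Qed.

Lemma continuous_x (t : R) : Rbar_lt t T -> continuous x t.
Proof.
  intros Ht; apply (ex_derive_continuous (K := R_AbsRing) (V := R_NormedModule)).
  eexists; apply is_derive_x; auto.
Qed.

Lemma continuous_y (t : R) : Rbar_lt t T -> continuous y t.
Proof.
  intros Ht; apply (ex_derive_continuous (K := R_AbsRing) (V := R_NormedModule)).
  eexists; apply is_derive_y; auto.
Qed.

Lemma continuous_damping (t : R) : Rbar_lt t T -> continuous (fun s => Nr - 2 + m * y s) t.
Proof.
  intros Ht; apply (continuous_plus (fun _ => Nr - 2) (fun s => m * y s));
    [apply continuous_const|apply (continuous_scal_r m y), continuous_y; auto].
Qed.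

Lemma damping_pos_near_minfty : exists t2 : R, Rbar_lt t2 T /\
  forall s, s < t2 -> 0 < Nr - 2 + m * y s.
Proof.
  destruct exists_in_domain as [tD HtD]; assert (Hn := Nr_ge3).
  destruct (is_lim_minfty_eps y 0 Hly (/ (2 * m))) as [M HM]; [apply Rinv_0_lt_compat; lra|].
  exists (Rmin M tD); split; [apply (Rbar_lt_down T tD); auto; apply Rmin_r|].
  intros s Hs; assert (Rmin M tD <= M) by apply Rmin_l.
  specialize (HM s ltac:(lra)); rewrite Rminus_0_r in HM; apply Rabs_def2 in HM.
  assert (m * y s > - / 2); [|lra].
  replace (- / 2) with (m * - / (2 * m)) by (field; lra); apply Rmult_lt_compat_l; lra.
Qed.

Lemma zero_at_minfty (f : R -> R) : is_lim f m_infty 0 ->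
  forall eps, 0 < eps -> exists M, forall s, s < M -> Rabs (f s) < eps.
Proof.
  intros H eps He; destruct (is_lim_minfty_eps f 0 H eps He) as [M HM].
  exists M; intros s Hs; rewrite <- (Rminus_0_r (f s)); auto.
Qed.

(* -y solves (-y)' = -(N - 2 + m y + k x)(-y) + x with forcing x > 0. *)
Lemma y_neg (t : R) : Rbar_lt t T -> y t < 0.
Proof.
  intros Ht; destruct damping_pos_near_minfty as [t2 [Ht2 Hdamp]].
  enough (0 < - y t) by lra.
  apply (linear_ode_pos T (fun s => - y s) (fun s => Nr - 2 + m * y s + k * x s) x t2); auto.
  - intros s Hs; assert (D := is_derive_y s Hs).
    auto_derive; [close_ex_derive|rewrite_Derive D; ring].
  - apply x_pos.
  - intros s Hs; apply (continuous_plus (fun s => Nr - 2 + m * y s) (fun s => k * x s));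
      [apply continuous_damping; auto|apply (continuous_scal_r k x), continuous_x; auto].
  - intros s Hs; assert (Hx := x_pos s (Rbar_lt_down T t2 s Ht2 (Rlt_le _ _ Hs))).
    assert (Hk := k_pos); specialize (Hdamp s Hs); nra.
  - intros eps He; destruct (zero_at_minfty y Hly eps He) as [M HM].
    exists M; intros; rewrite Rabs_Ropp; auto.
Qed.

(* [w := y + x/N] measures the distance to the invariant line of the critical case:
   w' = -(N - 2 + m y) w - (k - 1/N) x y, where -x y > 0. *)
Lemma is_derive_w (t : R) : Rbar_lt t T -> is_derive (fun s => y s + x s / Nr) t
   (- (Nr - 2 + m * y t) * (y t + x t / Nr) + (- (k - / Nr) * x t * y t)).
Proof.
  intros Ht; assert (Dx := is_derive_x t Ht); assert (Dy := is_derive_y t Ht).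
  assert (Hn := Nr_ge3).
  auto_derive; [close_ex_derive|rewrite_Derive Dx; rewrite_Derive Dy; field; lra].
Qed.

Lemma w_zero_at_minfty : forall eps, 0 < eps ->
  exists M, forall s, s < M -> Rabs (y s + x s / Nr) < eps.
Proof.
  intros eps He; assert (Hn := Nr_ge3).
  destruct (zero_at_minfty y Hly (eps / 2)) as [M1 HM1]; [lra|].
  destruct (zero_at_minfty x Hlx (eps / 2)) as [M2 HM2]; [lra|].
  exists (Rmin M1 M2); intros s Hs.
  assert (A1 := Rmin_l M1 M2); assert (A2 := Rmin_r M1 M2).
  specialize (HM1 s ltac:(lra)); specialize (HM2 s ltac:(lra)).
  eapply Rle_lt_trans; [apply Rabs_triang|].
  unfold Rdiv; rewrite Rabs_mult, (Rabs_right (/ Nr)) by (apply Rle_ge, Rlt_le, Rinv_0_lt_compat; lra).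
  assert (/ Nr < 1) by (rewrite <- Rinv_1; apply Rinv_lt_contravar; lra).
  assert (0 < / Nr) by (apply Rinv_0_lt_compat; lra).
  assert (P := Rabs_pos (x s)); nra.
Qed.

Lemma w_pos : 0 < k - / Nr -> forall t : R, Rbar_lt t T -> 0 < y t + x t / Nr.
Proof.
  intros Hd; destruct damping_pos_near_minfty as [t2 [Ht2 Ha]].
  apply (linear_ode_pos T _ (fun s => Nr - 2 + m * y s) (fun s => - (k - / Nr) * x s * y s) t2);
    auto using is_derive_w, continuous_damping, w_zero_at_minfty.
  intros t Ht; assert (Hx := x_pos t Ht); assert (Hy := y_neg t Ht).
  assert (0 < x t * - y t) by nra; nra.
Qed.

Lemma w_neg : k - / Nr < 0 -> forall t : R, Rbar_lt t T -> y t + x t / Nr < 0.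
Proof.
  intros Hd t Ht; destruct damping_pos_near_minfty as [t2 [Ht2 Ha]].
  enough (0 < - (y t + x t / Nr)) by lra.
  apply (linear_ode_pos T (fun s => - (y s + x s / Nr)) (fun s => Nr - 2 + m * y s)
           (fun s => (k - / Nr) * x s * y s) t2); auto using continuous_damping.
  - intros s Hs; apply (is_derive_eq_value _ _ _ _ (is_derive_opp _ _ _ (is_derive_w s Hs))).
    simpl; unfold opp; simpl; ring.
  - intros s Hs; assert (Hx := x_pos s Hs); assert (Hy := y_neg s Hs).
    assert (0 < x s * - y s) by nra; nra.
  - intros eps He; destruct (w_zero_at_minfty eps He) as [M HM].
    exists M; intros; rewrite Rabs_Ropp; auto.
Qed.

Lemma w_zero : k = / Nr -> forall t : R, Rbar_lt t T -> y t + x t / Nr = 0.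
Proof.
  intros Hd; destruct damping_pos_near_minfty as [t2 [Ht2 Ha]].
  apply (linear_ode_zero T _ (fun s => Nr - 2 + m * y s) t2);
    auto using continuous_damping, w_zero_at_minfty.
  intros t Ht; apply (is_derive_eq_value _ _ _ _ (is_derive_w t Ht)); rewrite Hd; ring.
Qed.

Lemma x_exp_nondecreasing (s t : R) : Rbar_lt t T -> s <= t ->
  x s * exp (-2 * s) <= x t * exp (-2 * t).
Proof.
  intros Ht Hst.
  assert (HD : forall u, s <= u <= t -> Rbar_lt u T) by (intros; apply (Rbar_lt_down T t); auto; lra).
  apply (is_derive_nonneg_le (fun u => x u * exp (-2 * u))
           (fun u => x u * exp (-2 * u) * (- (m - 1) * y u))); auto.
  - intros u Hu; assert (Dx := is_derive_x u (HD u Hu)).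
    auto_derive; [close_ex_derive|rewrite_Derive Dx; ring].
  - intros u Hu; assert (Hx := x_pos u (HD u ltac:(lra))); assert (Hy := y_neg u (HD u ltac:(lra))).
    assert (He := exp_pos (-2 * u)); apply Rmult_le_pos; [|nra].
    apply Rmult_le_pos; lra.
Qed.

Lemma x_nondecreasing (s t : R) : Rbar_lt t T -> s <= t -> x s <= x t.
Proof.
  intros Ht Hst.
  assert (HD : forall u, s <= u <= t -> Rbar_lt u T) by (intros; apply (Rbar_lt_down T t); auto; lra).
  apply (is_derive_nonneg_le x (fun u => x u * (2 - (m - 1) * y u))); auto.
  - intros u Hu; apply is_derive_x, HD; auto.
  - intros u Hu; assert (Hx := x_pos u (HD u ltac:(lra))); assert (Hy := y_neg u (HD u ltac:(lra))).
    apply Rmult_le_pos; nra.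
Qed.

Lemma x_linear_lower_bound (t : R) : Rbar_lt t T -> Rbar_lt 0 T -> 0 <= t ->
  x 0 * (1 + 2 * t) <= x t.
Proof.
  intros Ht H0 Ht0; assert (H := x_exp_nondecreasing 0 t Ht Ht0).
  rewrite Rmult_0_r, exp_0, Rmult_1_r in H.
  assert (E : exp (-2 * t) * exp (2 * t) = 1) by (rewrite <- exp_plus, <- exp_0; f_equal; ring).
  assert (He : 1 + 2 * t <= exp (2 * t)).
  { destruct (Req_dec t 0) as [->|Hne]; [rewrite Rmult_0_r, exp_0; lra|].
    apply Rlt_le, exp_ineq1; lra. }
  assert (Hx0 : 0 < x 0) by (apply x_pos; auto).
  assert (x 0 * exp (2 * t) <= x t * exp (-2 * t) * exp (2 * t))
    by (apply Rmult_le_compat_r; [apply Rlt_le, exp_pos|auto]).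
  rewrite Rmult_assoc, E, Rmult_1_r in H1; nra.
Qed.

Lemma Y_neg (t : R) : Rbar_lt t T -> Y1 x y t < 0.
Proof.
  intros Ht; assert (Hx := x_pos t Ht); assert (Hy := y_neg t Ht).
  unfold Y1, Rdiv; assert (0 < / x t) by (apply Rinv_0_lt_compat; auto); nra.
Qed.

Lemma Z1_zero (t : R) : Rbar_lt t T -> Z1 x z t = 0.
Proof. intros Ht; unfold Z1; rewrite (proj1 (Hzx t Ht)); unfold Rdiv; ring. Qed.

(* The Lyapunov-type function Y - (k - 1/N)/(m - 1) (ln x - 2t) + t is nondecreasing
   when w > 0; its derivative is -y (N + y + x/N) / x. *)
Lemma supercritical_ln_x_bound (t1 : R) : 0 < k - / Nr -> Rbar_lt t1 T ->
  exists C, forall t, t1 <= t -> Rbar_lt t T ->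
    (k - / Nr) / (m - 1) * ln (x t) <= (2 * ((k - / Nr) / (m - 1)) + 1) * t + C.
Proof.
  intros Hd Ht1; assert (Hn := Nr_ge3); set (c := (k - / Nr) / (m - 1)).
  set (G := fun u => y u / x u - c * (ln (x u) - 2 * u) + u).
  exists (- G t1); intros t Ht1t Ht.
  assert (HD : forall u, t1 <= u <= t -> Rbar_lt u T) by (intros; apply (Rbar_lt_down T t); auto; lra).
  assert (HG : G t1 <= G t).
  { apply (is_derive_nonneg_le G (fun u => (- y u) * (Nr + y u + x u / Nr) / x u)); auto.
    - intros u Hu; assert (Dx := is_derive_x u (HD u Hu)); assert (Dy := is_derive_y u (HD u Hu)).
      assert (Hx := x_pos u (HD u Hu)); unfold G, c.
      auto_derive; [close_ex_derive|rewrite_Derive Dx; rewrite_Derive Dy; field; repeat split; lra].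
    - intros u Hu; assert (Hu' := HD u ltac:(lra)).
      assert (Hx := x_pos u Hu'); assert (Hy := y_neg u Hu'); assert (Hw := w_pos Hd u Hu').
      apply Rmult_le_pos; [apply Rmult_le_pos; lra|apply Rlt_le, Rinv_0_lt_compat; auto]. }
  assert (HGt : G t = y t / x t - c * (ln (x t) - 2 * t) + t) by reflexivity.
  assert (HY := Y_neg t Ht); unfold Y1 in HY; lra.
Qed.

Lemma supercritical_not_finite (b : R) : 0 < k - / Nr -> T <> Finite b.
Proof.
  intros Hd HT; assert (Hn := Nr_ge3).
  assert (HD : forall u, u < b -> Rbar_lt u T) by (intros; rewrite HT; simpl; auto).
  set (c := (k - / Nr) / (m - 1)); assert (Hc : 0 < c) by (apply Rdiv_lt_0_compat; lra).
  destruct (supercritical_ln_x_bound (b - 1) Hd (HD (b - 1) ltac:(lra))) as [C HC].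
  set (A := ((2 * c + 1) * Rabs b + Rabs C) / c).
  apply (S2_plane_blowup Nr m sigma p b (exp A) (b - 1) x y z).
  - rewrite <- HT; exact Hsol.
  - rewrite <- HT; exact Hmax.
  - intros t Ht; apply Hzx, HD; auto.
  - lra.
  - intros t Ht; assert (Htd := HD t ltac:(lra)).
    assert (Hx := x_pos t Htd); assert (Hy := y_neg t Htd); assert (Hw := w_pos Hd t Htd).
    assert (Hlnx : ln (x t) <= A).
    { specialize (HC t ltac:(lra) Htd).
      assert (t <= Rabs b) by (assert (b <= Rabs b) by apply Rle_abs; lra).
      assert (C <= Rabs C) by apply Rle_abs.
      assert ((2 * c + 1) * t <= (2 * c + 1) * Rabs b) by (apply Rmult_le_compat_l; lra).
      unfold A; apply (Rmult_le_reg_l c); auto; replace (c * (((2 * c + 1) * Rabs b + Rabs C) / c))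
        with ((2 * c + 1) * Rabs b + Rabs C) by (field; lra); unfold c in *; lra. }
    assert (Hxb : x t <= exp A)
      by (rewrite <- (exp_ln (x t)) by auto; destruct (Req_dec (ln (x t)) A) as [->|]; [lra|];
          apply Rlt_le, exp_increasing; lra).
    rewrite (Rabs_right (x t)), (Rabs_left (y t)) by lra; split; [lra|].
    assert (x t / Nr <= x t); [|lra].
    unfold Rdiv; assert (/ Nr <= 1) by (rewrite <- Rinv_1; apply Rinv_le_contravar; lra).
    assert (0 < / Nr) by (apply Rinv_0_lt_compat; lra); nra.
Qed.

Lemma X_to_0_of_global : T = p_infty -> filterlim (X1 x) (Rbar_locally p_infty) (locally 0).
Proof.
  intros HT; assert (HD : forall u : R, Rbar_lt u T) by (intros; rewrite HT; simpl; auto).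
  assert (Hx0 : 0 < x 0) by apply x_pos, HD.
  apply filterlim_pinfty_of_eps; intros eps He; exists (/ (2 * x 0 * eps)); intros t Ht.
  assert (0 < / (2 * x 0 * eps)) by (apply Rinv_0_lt_compat; nra).
  assert (H1 := x_linear_lower_bound t (HD t) (HD 0) ltac:(lra)); assert (Hx := x_pos t (HD t)).
  unfold X1; rewrite Rminus_0_r, Rabs_right by (apply Rle_ge, Rlt_le, Rinv_0_lt_compat; auto).
  apply (Rmult_lt_compat_l (2 * x 0 * eps)) in Ht; [|nra].
  rewrite Rinv_r in Ht by nra.
  apply (Rmult_lt_reg_r (x t)); auto; rewrite Rinv_l by lra; nra.
Qed.

(* Comparison with the equation Y' = -lam Y - 1 (solution -1/lam), valid once (k - 1/N) x >= lam. *)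
Lemma supercritical_Phi_nondecreasing (lam t0 t : R) : 0 < k - / Nr -> T = p_infty -> 0 < lam ->
  (forall u, t0 <= u -> lam <= (k - / Nr) * x u) -> t0 <= t ->
  (Y1 x y t0 + / lam) * exp (lam * t0) <= (Y1 x y t + / lam) * exp (lam * t).
Proof.
  intros Hd HT Hlam Hbig Ht; assert (Hn := Nr_ge3).
  assert (HD : forall u : R, Rbar_lt u T) by (intros; rewrite HT; simpl; auto).
  apply (is_derive_nonneg_le (fun u => (Y1 x y u + / lam) * exp (lam * u))
           (fun u => exp (lam * u) * ((y u / x u) * (- Nr - y u - k * x u + lam)))); auto.
  - intros u Hu; assert (Dx := is_derive_x u (HD u)); assert (Dy := is_derive_y u (HD u)).
    assert (Hx := x_pos u (HD u)); unfold Y1.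
    auto_derive; [close_ex_derive|rewrite_Derive Dx; rewrite_Derive Dy; field; lra].
  - intros u Hu; assert (Hx := x_pos u (HD u)); assert (Hw := w_pos Hd u (HD u)).
    assert (Hb := Hbig u ltac:(lra)); assert (HY := Y_neg u (HD u)); unfold Y1 in HY.
    assert (E : k * x u = (k - / Nr) * x u + x u / Nr) by (field; lra).
    assert (He := exp_pos (lam * u)); apply Rmult_le_pos; [lra|nra].
Qed.

Lemma supercritical_Y_to_0 : 0 < k - / Nr -> T = p_infty ->
  filterlim (Y1 x y) (Rbar_locally p_infty) (locally 0).
Proof.
  intros Hd HT; assert (Hn := Nr_ge3).
  assert (HD : forall u : R, Rbar_lt u T) by (intros; rewrite HT; simpl; auto).
  assert (Hx0 : 0 < x 0) by apply x_pos, HD.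
  apply filterlim_pinfty_of_eps; intros eps He.
  set (dl := k - / Nr) in *.
  set (lam := 2 / eps); assert (Hlam : 0 < lam) by (apply Rdiv_lt_0_compat; lra).
  set (t0 := / (dl * eps * x 0)).
  assert (Ht0 : 0 < t0) by (apply Rinv_0_lt_compat, Rmult_lt_0_compat; nra).
  assert (Hbig : forall u, t0 <= u -> lam <= dl * x u).
  { intros u Hu; assert (H1 := x_linear_lower_bound u (HD u) (HD 0) ltac:(lra)).
    assert (dl * x 0 * (2 * t0) = lam) by (unfold lam, t0; field; repeat split; lra).
    assert (dl * x 0 * (2 * t0) <= dl * x 0 * (1 + 2 * u))
      by (apply Rmult_le_compat_l; nra).
    nra. }
  exists (t0 + 1); intros t Ht.
  assert (HPhi := supercritical_Phi_nondecreasing lam t0 t Hd HT Hlam Hbig ltac:(lra)).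
  assert (HY0 : - / Nr < Y1 x y t0).
  { assert (Hx := x_pos t0 (HD t0)); assert (Hw := w_pos Hd t0 (HD t0)); unfold Y1.
    apply (Rmult_lt_reg_r (x t0)); auto; field_simplify; lra. }
  assert (HYt := Y_neg t (HD t)).
  set (E := exp (lam * (t - t0))).
  assert (HE : exp (lam * t) = exp (lam * t0) * E) by (unfold E; rewrite <- exp_plus; f_equal; ring).
  assert (HE1 : 1 + lam <= E) by (unfold E; apply Rlt_le; eapply Rle_lt_trans; [|apply exp_ineq1; nra]; nra).
  assert (He0 := exp_pos (lam * t0)).
  assert (Hinv : / Nr <= 1) by (rewrite <- Rinv_1; apply Rinv_le_contravar; lra).
  assert (Hil : 0 < / lam) by (apply Rinv_0_lt_compat; auto).
  set (q := Y1 x y t + / lam).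
  assert (Hq : - 1 <= q * E).
  { rewrite HE in HPhi; fold q in HPhi.
    apply (Rmult_le_reg_r (exp (lam * t0))); auto; nra. }
  assert (Hql : - 1 < q * lam) by (destruct (Rle_or_lt 0 q); [nra|assert (q * E <= q * (1 + lam)) by nra; nra]).
  assert (eps = 2 * / lam) by (unfold lam; field; lra).
  assert (/ lam * lam = 1) by (field; lra).
  rewrite Rminus_0_r, Rabs_left by auto; unfold q in Hql; nra.
Qed.

Lemma l0_supercritical : 0 < k - / Nr ->
  filterlim (X1 x) (end_filter T) (locally 0) /\
  filterlim (Y1 x y) (end_filter T) (locally 0) /\
  filterlim (Z1 x z) (end_filter T) (locally 0).
Proof.
  intros Hd; destruct end_cases as [HT | [b HT]]; [|exfalso; exact (supercritical_not_finite b Hd HT)].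
  assert (HD : forall u : R, Rbar_lt u T) by (intros; rewrite HT; simpl; auto).
  rewrite HT; simpl; split; [apply X_to_0_of_global, HT|split; [apply supercritical_Y_to_0; auto|]].
  apply filterlim_pinfty_of_eps; intros eps He; exists 0; intros t _.
  rewrite Z1_zero, Rminus_0_r, Rabs_R0 by apply HD; auto.
Qed.

Lemma critical_y_eq (t : R) : k = / Nr -> Rbar_lt t T -> y t = - x t / Nr.
Proof. intros Hd Ht; assert (H := w_zero Hd t Ht); unfold Rdiv in *; lra. Qed.

Lemma critical_not_global : k = / Nr -> T <> p_infty.
Proof.
  intros Hd HT; assert (Hn := Nr_ge3).
  assert (HD : forall u : R, Rbar_lt u T) by (intros; rewrite HT; simpl; auto).
  set (Psi := fun u => / x u + (m - 1) / Nr * u).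
  assert (HPsi : forall t, 0 <= t -> Psi t <= Psi 0).
  { intros t Ht; apply (is_derive_nonpos_le Psi (fun u => - 2 / x u)); auto.
    - intros u Hu; assert (Dx := is_derive_x u (HD u)); assert (Hx := x_pos u (HD u)).
      apply (is_derive_eq_value _ _ (- (x u * (2 - (m - 1) * y u)) / (x u)^2 + (m - 1) / Nr)).
      + unfold Psi; auto_derive; [close_ex_derive|rewrite_Derive Dx; field; lra].
      + rewrite (critical_y_eq u Hd (HD u)); field; lra.
    - intros u Hu; assert (Hx := x_pos u (HD u)).
      assert (0 < / x u) by (apply Rinv_0_lt_compat; auto); unfold Rdiv; lra. }
  set (t := Nr / (m - 1) * / x 0 + 1).
  assert (Hx0 := x_pos 0 (HD 0)).
  assert (Ht : 0 <= t)
    by (assert (0 < Nr / (m - 1) * / x 0)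
          by (apply Rmult_lt_0_compat; [apply Rdiv_lt_0_compat|apply Rinv_0_lt_compat]; lra);
        unfold t; lra).
  specialize (HPsi t Ht); unfold Psi in HPsi; rewrite Rmult_0_r, Rplus_0_r in HPsi.
  assert (0 < / x t) by (apply Rinv_0_lt_compat, x_pos, HD).
  assert ((m - 1) / Nr * t = / x 0 + (m - 1) / Nr) by (unfold t; field; lra).
  assert (0 < (m - 1) / Nr) by (apply Rdiv_lt_0_compat; lra); lra.
Qed.

Lemma critical_x_unbounded (b : R) : k = / Nr -> T = Finite b ->
  forall K, 0 < K -> exists s, s < b /\ forall t, s < t < b -> K < x t.
Proof.
  intros Hd HT K HK; assert (Hn := Nr_ge3).
  assert (HD : forall u, u < b -> Rbar_lt u T) by (intros; rewrite HT; simpl; auto).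
  destruct (classic (exists s, b - 1 < s < b /\ K < x s)) as [[s [Hs HKs]]|Hno].
  - exists s; split; [lra|]; intros t Ht.
    assert (x s <= x t) by (apply x_nondecreasing; [apply HD|]; lra); lra.
  - exfalso; apply (S2_plane_blowup Nr m sigma p b K (b - 1) x y z).
    + rewrite <- HT; exact Hsol.
    + rewrite <- HT; exact Hmax.
    + intros t Ht; apply Hzx, HD; auto.
    + lra.
    + intros t Ht; assert (Htd := HD t ltac:(lra)).
      assert (Hx := x_pos t Htd); assert (Hy := y_neg t Htd).
      assert (Hxk : x t <= K) by (apply Rnot_lt_le; intro; apply Hno; exists t; auto).
      assert (x t / Nr <= x t)
        by (unfold Rdiv; assert (/ Nr <= 1) by (rewrite <- Rinv_1; apply Rinv_le_contravar; lra);
            assert (0 < / Nr) by (apply Rinv_0_lt_compat; lra); nra).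
      rewrite (Rabs_right (x t)), (Rabs_left (y t)), (critical_y_eq t Hd Htd) by lra.
      unfold Rdiv in *; split; lra.
Qed.

Lemma critical_x_onto (b : R) : k = / Nr -> T = Finite b ->
  forall s, 0 < s -> exists t : R, Rbar_lt t T /\ x t = s.
Proof.
  intros Hd HT s Hs.
  assert (HD : forall u, u < b -> Rbar_lt u T) by (intros; rewrite HT; simpl; auto).
  destruct (zero_at_minfty x Hlx s Hs) as [M HM].
  set (ta := Rmin M (b - 1) - 1); assert (A1 := Rmin_l M (b - 1)); assert (A2 := Rmin_r M (b - 1)).
  assert (Hxa : x ta < s) by (specialize (HM ta ltac:(unfold ta; lra)); apply Rabs_def2 in HM; lra).
  destruct (critical_x_unbounded b Hd HT s Hs) as [s1 [Hs1 Hs1']].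
  set (tc := (Rmax s1 ta + b) / 2); assert (A3 := Rmax_l s1 ta); assert (A4 := Rmax_r s1 ta).
  assert (Hmb : Rmax s1 ta < b) by (unfold Rmax; destruct Rle_dec; unfold ta; lra).
  assert (Hxc := Hs1' tc ltac:(unfold tc; lra)).
  destruct (Ranalysis5.IVT_interv (fun u => x u - s) ta tc) as [t0 [Ht0 Ht0']];
    [|unfold tc; lra|lra|lra|exists t0; split; [apply HD; unfold tc in Ht0; lra|lra]].
  intros a Ha; apply continuity_pt_minus; [|apply continuity_pt_const; intros ? ?; reflexivity].
  apply continuity_pt_filterlim, continuous_x, HD; unfold tc in Ha; lra.
Qed.

Lemma l0_critical : k = / Nr ->
  (forall t : R, Rbar_lt t T -> y t = - x t / Nr /\ z t = 0 /\ 0 < x t) /\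
  (forall s : R, 0 < s -> exists t : R, Rbar_lt t T /\ x t = s) /\
  filterlim (X1 x) (end_filter T) (locally 0) /\
  filterlim (Y1 x y) (end_filter T) (locally (- k)) /\
  filterlim (Z1 x z) (end_filter T) (locally 0).
Proof.
  intros Hd; assert (Hn := Nr_ge3).
  destruct end_cases as [HT | [b HT]]; [exfalso; exact (critical_not_global Hd HT)|].
  assert (HD : forall u, u < b -> Rbar_lt u T) by (intros; rewrite HT; simpl; auto).
  split; [intros t Ht; split; [apply critical_y_eq|apply Hzx]; auto|].
  split; [apply (critical_x_onto b); auto|].
  rewrite HT; simpl; split; [|split]; apply filterlim_at_left_of_eps; intros eps He.
  - destruct (critical_x_unbounded b Hd HT (/ eps)) as [s [Hs Hs']];
      [apply Rinv_0_lt_compat; lra|].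
    exists s; split; auto; intros t Ht; specialize (Hs' t Ht).
    assert (0 < / eps) by (apply Rinv_0_lt_compat; lra).
    unfold X1; rewrite Rminus_0_r, Rabs_right by (apply Rle_ge, Rlt_le, Rinv_0_lt_compat; lra).
    rewrite <- (Rinv_inv eps); apply Rinv_lt_contravar; nra.
  - exists (b - 1); split; [lra|]; intros t Ht.
    assert (Hx := x_pos t (HD t ltac:(lra))).
    unfold Y1; rewrite (critical_y_eq t Hd (HD t ltac:(lra))), Hd.
    replace (- x t / Nr / x t - - / Nr) with 0 by (field; lra); rewrite Rabs_R0; auto.
  - exists (b - 1); split; [lra|]; intros t Ht.
    rewrite Z1_zero, Rminus_0_r, Rabs_R0 by (apply HD; lra); auto.
Qed.

Lemma subcritical_kN_lt_1 : k - / Nr < 0 -> k * Nr < 1.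
Proof.
  intros Hd; assert (Hn := Nr_ge3).
  assert (k * Nr < / Nr * Nr) by (apply Rmult_lt_compat_r; lra).
  rewrite Rinv_l in H by lra; exact H.
Qed.

Lemma subcritical_x_lt (t : R) : k - / Nr < 0 -> Rbar_lt t T -> x t < Nr * - y t.
Proof.
  intros Hd Ht; assert (Hn := Nr_ge3); assert (Hw := w_neg Hd t Ht).
  apply (Rmult_lt_reg_r (/ Nr)); [apply Rinv_0_lt_compat; lra|].
  replace (Nr * - y t * / Nr) with (- y t) by (field; lra); unfold Rdiv in Hw; lra.
Qed.

Lemma neg_y_large_of_global : k - / Nr < 0 -> T = p_infty ->
  forall c, exists t0, 0 <= t0 /\ forall u, t0 <= u -> c < - y u.
Proof.
  intros Hd HT c; assert (Hn := Nr_ge3).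
  assert (HD : forall u : R, Rbar_lt u T) by (intros; rewrite HT; simpl; auto).
  assert (Hx0 := x_pos 0 (HD 0)).
  exists (Rmax 0 (Nr * c / (2 * x 0))); split; [apply Rmax_l|]; intros u Hu.
  assert (A1 := Rmax_l 0 (Nr * c / (2 * x 0))); assert (A2 := Rmax_r 0 (Nr * c / (2 * x 0))).
  assert (H1 := x_linear_lower_bound u (HD u) (HD 0) ltac:(lra)).
  assert (H2 := subcritical_x_lt u Hd (HD u)).
  assert (x 0 * (2 * (Nr * c / (2 * x 0))) <= x 0 * (2 * u)) by (apply Rmult_le_compat_l; lra).
  replace (x 0 * (2 * (Nr * c / (2 * x 0)))) with (Nr * c) in H by (field; lra).
  apply (Rmult_lt_reg_l Nr); lra.
Qed.

(* Once -y > 2(N - 2)/mu, with mu = m - kN > 0, the function -1/y + mu t / 2 is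
   nonincreasing, which forces -1/y < 0 in finite time. *)
Lemma subcritical_not_global : k - / Nr < 0 -> T <> p_infty.
Proof.
  intros Hd HT; assert (Hn := Nr_ge3); assert (Hk := k_pos); assert (Hkn := subcritical_kN_lt_1 Hd).
  assert (HD : forall u : R, Rbar_lt u T) by (intros; rewrite HT; simpl; auto).
  set (mu := m - k * Nr); assert (Hmu : 0 < mu) by (unfold mu; lra).
  destruct (neg_y_large_of_global Hd HT (2 * (Nr - 2) / mu)) as [t0 [Ht0 Hbig]].
  set (Psi := fun u => - / y u + (mu / 2) * u).
  assert (HPsi : forall t, t0 <= t -> Psi t <= Psi t0).
  { intros t Ht.
    apply (is_derive_nonpos_le Psi
             (fun u => (- x u - (Nr - 2) * y u - m * y u ^ 2 - k * x u * y u) / (y u)^2 + mu / 2)); auto.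
    - intros u Hu; assert (Dy := is_derive_y u (HD u)); assert (Hy := y_neg u (HD u)).
      unfold Psi; auto_derive; [close_ex_derive|rewrite_Derive Dy; field; lra].
    - intros u Hu; assert (Hy := y_neg u (HD u)); assert (Hx := x_pos u (HD u)).
      assert (Hxn := subcritical_x_lt u Hd (HD u)); assert (Hb := Hbig u ltac:(lra)).
      assert (Hy2 : 0 < (y u)^2) by (simpl; nra).
      assert (Hc : Nr - 2 <= mu / 2 * - y u).
      { apply (Rmult_lt_compat_l (mu / 2)) in Hb; [|lra].
        replace (mu / 2 * (2 * (Nr - 2) / mu)) with (Nr - 2) in Hb by (field; lra); lra. }
      assert (k * x u * - y u <= k * (Nr * - y u) * - y u)
        by (apply Rmult_le_compat_r; [lra|apply Rmult_le_compat_l; lra]).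
      assert ((Nr - 2) * - y u <= mu / 2 * - y u * - y u) by (apply Rmult_le_compat_r; lra).
      enough ((- x u - (Nr - 2) * y u - m * y u ^ 2 - k * x u * y u) / (y u)^2 <= - (mu / 2)) by lra.
      apply (Rmult_le_reg_r ((y u)^2)); auto.
      unfold Rdiv; rewrite Rmult_assoc, Rinv_l, Rmult_1_r by lra.
      unfold mu in *; simpl; nra. }
  assert (Hy0 := y_neg t0 (HD t0)).
  assert (Hp0 : 0 < - / y t0) by (rewrite <- Rinv_opp; apply Rinv_0_lt_compat; lra).
  set (t := t0 + 2 * (- / y t0) / mu + 1).
  assert (Htt : t0 <= t) by (assert (0 < 2 * (- / y t0) / mu) by (apply Rdiv_lt_0_compat; lra); unfold t; lra).
  specialize (HPsi t Htt); unfold Psi in HPsi.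
  assert (Hyt := y_neg t (HD t)).
  assert (0 < - / y t) by (rewrite <- Rinv_opp; apply Rinv_0_lt_compat; lra).
  assert (mu / 2 * t = mu / 2 * t0 + - / y t0 + mu / 2) by (unfold t; field; lra); lra.
Qed.

Lemma subcritical_neg_y_growth (s t : R) : k - / Nr < 0 -> Rbar_lt t T -> s <= t ->
  - y s * exp ((Nr - 2) * s) <= - y t * exp ((Nr - 2) * t).
Proof.
  intros Hd Ht Hst; assert (Hn := Nr_ge3); assert (Hk := k_pos); assert (Hkn := subcritical_kN_lt_1 Hd).
  assert (HD : forall u, s <= u <= t -> Rbar_lt u T) by (intros; apply (Rbar_lt_down T t); auto; lra).
  apply (is_derive_nonneg_le (fun u => - y u * exp ((Nr - 2) * u))
           (fun u => exp ((Nr - 2) * u) * (x u + m * (y u)^2 + k * x u * y u))); auto.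
  - intros u Hu; assert (Dy := is_derive_y u (HD u Hu)).
    auto_derive; [close_ex_derive|rewrite_Derive Dy; ring].
  - intros u Hu; assert (Hu' := HD u ltac:(lra)).
    assert (Hy := y_neg u Hu'); assert (Hx := x_pos u Hu'); assert (Hxn := subcritical_x_lt u Hd Hu').
    assert (k * x u <= k * (Nr * - y u)) by (apply Rmult_le_compat_l; lra).
    assert (0 <= m * (y u)^2 + k * x u * y u) by (simpl; nra).
    assert (He := exp_pos ((Nr - 2) * u)); apply Rmult_le_pos; lra.
Qed.

Lemma x_le_of_neg_y_le (K t1 t : R) : Rbar_lt t T -> t1 <= t ->
  (forall u, t1 < u < t -> - y u <= K) ->
  x t <= x t1 * exp ((2 + (m - 1) * K) * (t - t1)).
Proof.
  intros Ht Ht1 HK; set (C := 2 + (m - 1) * K).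
  assert (HD : forall u, t1 <= u <= t -> Rbar_lt u T) by (intros; apply (Rbar_lt_down T t); auto; lra).
  assert (Hm1 : x t * exp (- C * t) <= x t1 * exp (- C * t1)).
  { apply (is_derive_nonpos_le (fun u => x u * exp (- C * u))
             (fun u => x u * exp (- C * u) * (2 - (m - 1) * y u - C))); auto.
    - intros u Hu; assert (Dx := is_derive_x u (HD u Hu)).
      auto_derive; [close_ex_derive|rewrite_Derive Dx; ring].
    - intros u Hu; assert (Hx := x_pos u (HD u ltac:(lra))); assert (Hy := HK u Hu).
      assert (He := exp_pos (- C * u)); assert (0 < x u * exp (- C * u)) by nra.
      assert (2 - (m - 1) * y u - C <= 0) by (unfold C; nra); nra. }
  assert (E : exp (C * (t - t1)) = exp (- C * t1) * exp (C * t)) by (rewrite <- exp_plus; f_equal; ring).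
  assert (E2 : exp (- C * t) * exp (C * t) = 1) by (rewrite <- exp_plus, <- exp_0; f_equal; ring).
  rewrite E; apply (Rmult_le_compat_r (exp (C * t))) in Hm1; [|apply Rlt_le, exp_pos].
  rewrite Rmult_assoc, E2, Rmult_1_r, Rmult_assoc in Hm1; exact Hm1.
Qed.

Lemma subcritical_neg_y_unbounded (b : R) : k - / Nr < 0 -> T = Finite b ->
  forall K, 0 < K -> exists s, s < b /\ forall t, s < t < b -> K < - y t.
Proof.
  intros Hd HT K HK; assert (Hn := Nr_ge3).
  assert (HD : forall u, u < b -> Rbar_lt u T) by (intros; rewrite HT; simpl; auto).
  set (K' := K * exp (Nr - 2)); assert (HK' : 0 < K') by (unfold K'; assert (H := exp_pos (Nr - 2)); nra).
  destruct (classic (exists s, b - 1 < s < b /\ K' < - y s)) as [[s [Hs HKs]]|Hno].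
  - (* -y e^{(N-2)t} is nondecreasing and e^{(N-2)(t-s)} < e^{N-2} on (s, b) *)
    exists s; split; [lra|]; intros t Ht.
    assert (Hmono := subcritical_neg_y_growth s t Hd (HD t ltac:(lra)) ltac:(lra)).
    assert (E1 : exp ((Nr - 2) * t) < exp (Nr - 2) * exp ((Nr - 2) * s))
      by (rewrite <- exp_plus; apply exp_increasing; nra).
    assert (Hes := exp_pos ((Nr - 2) * s)); assert (Het := exp_pos ((Nr - 2) * t)).
    assert (Hyt := y_neg t (HD t ltac:(lra))); assert (Hen := exp_pos (Nr - 2)).
    assert (HKy : K' * exp ((Nr - 2) * s) < - y t * exp ((Nr - 2) * t)) by nra.
    assert (- y t * exp ((Nr - 2) * t) < - y t * (exp (Nr - 2) * exp ((Nr - 2) * s)))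
      by (apply Rmult_lt_compat_l; lra).
    apply (Rmult_lt_reg_r (exp (Nr - 2) * exp ((Nr - 2) * s))); [nra|].
    unfold K' in HKy; rewrite Rmult_assoc in HKy; eapply Rlt_trans; [exact HKy|exact H].
  - exfalso.
    assert (Hle : forall s, b - 1 < s < b -> - y s <= K')
      by (intros s Hs; apply Rnot_lt_le; intro; apply Hno; exists s; auto).
    set (C := 2 + (m - 1) * K'); assert (HC : 0 < C) by (unfold C; nra).
    assert (Hx1 := x_pos (b - 1) (HD (b - 1) ltac:(lra))).
    apply (S2_plane_blowup Nr m sigma p b (x (b - 1) * exp C + K') (b - 1) x y z).
    + rewrite <- HT; exact Hsol.
    + rewrite <- HT; exact Hmax.
    + intros t Ht; apply Hzx, HD; auto.
    + lra.
    + intros t Ht; assert (Htd := HD t ltac:(lra)).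
      assert (Hx := x_pos t Htd); assert (Hy := y_neg t Htd).
      assert (Hxb := x_le_of_neg_y_le K' (b - 1) t Htd ltac:(lra) (fun u Hu => Hle u ltac:(lra))).
      fold C in Hxb.
      assert (exp (C * (t - (b - 1))) <= exp C)
        by (destruct (Req_dec (t - (b - 1)) 1) as [->|]; [rewrite Rmult_1_r; lra|];
            apply Rlt_le, exp_increasing; nra).
      assert (Hyb := Hle t ltac:(lra)); assert (He := exp_pos C).
      assert (x (b - 1) * exp (C * (t - (b - 1))) <= x (b - 1) * exp C) by (apply Rmult_le_compat_l; lra).
      rewrite (Rabs_right (x t)), (Rabs_left (y t)) by lra; split; nra.
Qed.

Lemma subcritical_inv_neg_y_le (b : R) : k - / Nr < 0 -> T = Finite b ->
  exists s1, s1 < b /\ forall t, s1 < t < b -> / (- y t) <= (Nr + m) * (b - t).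
Proof.
  intros Hd HT; assert (Hn := Nr_ge3); assert (Hk := k_pos).
  assert (HD : forall u, u < b -> Rbar_lt u T) by (intros; rewrite HT; simpl; auto).
  destruct (subcritical_neg_y_unbounded b Hd HT 1 ltac:(lra)) as [s1 [Hs1 H1]].
  exists s1; split; auto; intros t Ht.
  (* where -y > 1, (1/(-y))' >= -(N + m); compare with points s' near b where 1/(-y s') < eps *)
  apply le_epsilon; intros eps He.
  destruct (subcritical_neg_y_unbounded b Hd HT (/ eps) ltac:(apply Rinv_0_lt_compat; lra))
    as [se [Hse Hse2]].
  set (s' := (Rmax t se + b) / 2); assert (A1 := Rmax_l t se); assert (A2 := Rmax_r t se).
  assert (Hmb : Rmax t se < b) by (unfold Rmax; destruct Rle_dec; lra).
  assert (Hys' := Hse2 s' ltac:(unfold s'; lra)); assert (Hyy := y_neg s' (HD s' ltac:(unfold s'; lra))).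
  assert (Hi : / (- y s') < eps).
  { rewrite <- (Rinv_inv eps); apply Rinv_lt_contravar; [|exact Hys'].
    apply Rmult_lt_0_compat; [apply Rinv_0_lt_compat|]; lra. }
  assert (Hmono : / (- y t) + (Nr + m) * t <= / (- y s') + (Nr + m) * s').
  { apply (is_derive_nonneg_le (fun u => / (- y u) + (Nr + m) * u)
      (fun u => (- x u - (Nr - 2) * y u - m * y u ^ 2 - k * x u * y u) / (y u)^2 + (Nr + m)));
      [unfold s'; lra| |].
    - intros u Hu; assert (Hud := HD u ltac:(unfold s' in Hu; lra)).
      assert (Dy := is_derive_y u Hud); assert (Hy := y_neg u Hud).
      auto_derive; [close_ex_derive|rewrite_Derive Dy; field; lra].
    - intros u Hu; assert (Hud := HD u ltac:(unfold s' in Hu; lra)).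
      assert (Hy := y_neg u Hud); assert (Hx := x_pos u Hud).
      assert (Hxn := subcritical_x_lt u Hd Hud); assert (Hu1 := H1 u ltac:(unfold s' in Hu; lra)).
      assert (Hy2 : 0 < (y u)^2) by (simpl; nra).
      assert (0 <= k * x u * - y u) by (apply Rmult_le_pos; nra).
      assert (Nr * - y u <= Nr * (y u)^2) by (simpl; nra).
      enough (- (Nr + m) <= (- x u - (Nr - 2) * y u - m * y u ^ 2 - k * x u * y u) / (y u)^2) by lra.
      apply (Rmult_le_reg_r ((y u)^2)); auto.
      unfold Rdiv; rewrite Rmult_assoc, Rinv_l, Rmult_1_r by lra; simpl; nra. }
  assert ((Nr + m) * s' <= (Nr + m) * b) by (apply Rmult_le_compat_l; unfold s'; lra); lra.
Qed.

(* With g = (1 - kN)/(N + m), ln(-Y) + g ln(b - t) + N t is nondecreasing near b. *)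
Lemma subcritical_ln_Y_lower (b : R) : k - / Nr < 0 -> T = Finite b ->
  exists t3 C, t3 < b /\ forall t, t3 <= t < b ->
    C - (1 - k * Nr) / (Nr + m) * ln (b - t) - Nr * t <= ln (- Y1 x y t).
Proof.
  intros Hd HT; assert (Hn := Nr_ge3); assert (Hk := k_pos); assert (Hkn := subcritical_kN_lt_1 Hd).
  assert (HD : forall u, u < b -> Rbar_lt u T) by (intros; rewrite HT; simpl; auto).
  destruct (subcritical_inv_neg_y_le b Hd HT) as [s1 [Hs1 HB]].
  set (g := (1 - k * Nr) / (Nr + m)).
  set (Psi := fun u => ln (- Y1 x y u) + g * ln (b - u) + Nr * u).
  set (t3 := (s1 + b) / 2).
  exists t3, (Psi t3); split; [unfold t3; lra|]; intros t Ht.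
  enough (Psi t3 <= Psi t) by (unfold Psi in *; lra).
  apply (is_derive_nonneg_le Psi (fun u => - x u / y u - y u - k * x u - g / (b - u))); [lra| |].
  - intros u Hu; assert (Hud := HD u ltac:(lra)).
    assert (Dx := is_derive_x u Hud); assert (Dy := is_derive_y u Hud).
    assert (Hx := x_pos u Hud); assert (HY := Y_neg u Hud); unfold Y1 in HY; assert (Hy := y_neg u Hud).
    unfold Psi, Y1; auto_derive; [close_ex_derive|rewrite_Derive Dx; rewrite_Derive Dy; field; repeat split; lra].
  - intros u Hu; assert (Hud := HD u ltac:(lra)).
    assert (Hy := y_neg u Hud); assert (Hx := x_pos u Hud); assert (Hxn := subcritical_x_lt u Hd Hud).
    assert (HBu := HB u ltac:(unfold t3 in *; lra)).
    assert (Hyu : / ((Nr + m) * (b - u)) <= - y u).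
    { rewrite <- (Rinv_inv (- y u)); apply Rinv_le_contravar; auto.
      apply Rinv_0_lt_compat; lra. }
    assert (Hgb : g / (b - u) = (1 - k * Nr) * / ((Nr + m) * (b - u))) by (unfold g; field; lra).
    assert ((1 - k * Nr) * / ((Nr + m) * (b - u)) <= (1 - k * Nr) * - y u) by (apply Rmult_le_compat_l; lra).
    assert (k * x u <= k * (Nr * - y u)) by (apply Rmult_le_compat_l; lra).
    assert (0 < - x u / y u) by (replace (- x u / y u) with (x u / - y u) by (field; lra);
                                 apply Rdiv_lt_0_compat; lra).
    lra.
Qed.

Lemma subcritical_Y_to_minfty (b : R) : k - / Nr < 0 -> T = Finite b ->
  filterlim (Y1 x y) (at_left b) (Rbar_locally m_infty).
Proof.
  intros Hd HT; assert (Hn := Nr_ge3); assert (Hk := k_pos); assert (Hkn := subcritical_kN_lt_1 Hd).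
  assert (HD : forall u, u < b -> Rbar_lt u T) by (intros; rewrite HT; simpl; auto).
  destruct (subcritical_ln_Y_lower b Hd HT) as [t3 [C [Ht3 Hln]]].
  set (g := (1 - k * Nr) / (Nr + m)) in Hln; assert (Hg : 0 < g) by (apply Rdiv_lt_0_compat; lra).
  apply filterlim_at_left_minfty_of_bound; intro K.
  set (K' := Rmax 1 (- K)); assert (HK1 : 1 <= K') by apply Rmax_l; assert (HK2 : - K <= K') by apply Rmax_r.
  set (A := ln K' - C + Nr * Rabs b).
  set (d := exp (- A / g)); assert (Hd0 : 0 < d) by apply exp_pos.
  exists (Rmax t3 (b - d)); split; [unfold Rmax; destruct Rle_dec; lra|]; intros t Ht.
  assert (A1 := Rmax_l t3 (b - d)); assert (A2 := Rmax_r t3 (b - d)).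
  assert (HY := Y_neg t (HD t ltac:(lra))); specialize (Hln t ltac:(lra)).
  assert (Hlnb : ln (b - t) < - A / g) by (rewrite <- (ln_exp (- A / g)); apply ln_increasing; fold d; lra).
  apply (Rmult_lt_compat_l g) in Hlnb; auto; replace (g * (- A / g)) with (- A) in Hlnb by (field; lra).
  assert (Nr * t <= Nr * Rabs b) by (apply Rmult_le_compat_l; [lra|]; assert (b <= Rabs b) by apply Rle_abs; lra).
  assert (Hmain : ln K' < ln (- Y1 x y t)) by (unfold A in Hlnb; lra).
  enough (K' < - Y1 x y t) by lra.
  destruct (Rlt_or_le K' (- Y1 x y t)) as [|Hc]; auto.
  destruct (Rle_lt_or_eq_dec _ _ Hc) as [Hc'|Hc']; [apply ln_increasing in Hc'|rewrite Hc' in Hmain]; lra.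
Qed.

Lemma subcritical_X_over_Y_to_0 (b : R) : k - / Nr < 0 -> T = Finite b ->
  filterlim (fun t => X1 x t / Y1 x y t) (at_left b) (locally 0).
Proof.
  intros Hd HT.
  assert (HD : forall u, u < b -> Rbar_lt u T) by (intros; rewrite HT; simpl; auto).
  apply filterlim_at_left_of_eps; intros eps He.
  destruct (subcritical_neg_y_unbounded b Hd HT (/ eps) ltac:(apply Rinv_0_lt_compat; lra)) as [s [Hs Hs2]].
  exists s; split; auto; intros t Ht; assert (Htd := HD t ltac:(lra)).
  assert (Hy := y_neg t Htd); assert (Hx := x_pos t Htd); specialize (Hs2 t Ht).
  unfold X1, Y1; replace (/ x t / (y t / x t) - 0) with (/ y t) by (field; lra).
  rewrite Rabs_inv, Rabs_left by lra.
  rewrite <- (Rinv_inv eps); apply Rinv_lt_contravar; auto.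
  apply Rmult_lt_0_compat; [apply Rinv_0_lt_compat|]; lra.
Qed.

Lemma l0_subcritical : k - / Nr < 0 ->
  filterlim (Y1 x y) (end_filter T) (Rbar_locally m_infty) /\
  filterlim (fun t => X1 x t / Y1 x y t) (end_filter T) (locally 0) /\
  (forall t : R, Rbar_lt t T -> Z1 x z t = 0).
Proof.
  intros Hd; destruct end_cases as [HT | [b HT]]; [exfalso; exact (subcritical_not_global Hd HT)|].
  split; [|split; [|exact Z1_zero]]; rewrite HT; simpl.
  - apply subcritical_Y_to_minfty; auto.
  - apply subcritical_X_over_Y_to_0; auto.
Qed.

End TrajectoryL0.

Lemma pF_sign (N : nat) (m sigma p : R) : (3 <= N)%nat -> 0 < sigma ->
  (p - m) / (sigma + 2) - / INR N = (p - pF (INR N) m sigma) / (sigma + 2).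
Proof.
  intros HN Hs; assert (3 <= INR N) by (replace 3 with (INR 3) by (simpl; ring); apply le_INR; auto).
  unfold pF; field; lra.
Qed.

Theorem lemma3p3 (N : nat) (m sigma p : R) (T : Rbar) (x y z : R -> R) :
  (3 <= N)%nat -> 1 < m -> 0 < sigma -> m < p ->
  S2_sol (INR N) m sigma p T x y z ->
  S2_maximal (INR N) m sigma p T x y z ->
  (forall t : R, Rbar_lt t T -> z t = 0 /\ 0 < x t) ->
  is_lim x m_infty 0 -> is_lim y m_infty 0 ->
  is_lim (fun t => y t / x t) m_infty (- / INR N) ->
  (p < pF (INR N) m sigma ->
     filterlim (Y1 x y) (end_filter T) (Rbar_locally m_infty) /\
     filterlim (fun t => X1 x t / Y1 x y t) (end_filter T) (locally 0) /\
     (forall t : R, Rbar_lt t T -> Z1 x z t = 0)) /\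
  (p = pF (INR N) m sigma ->
     (forall t : R, Rbar_lt t T -> y t = - x t / INR N /\ z t = 0 /\ 0 < x t) /\
     (forall s : R, 0 < s -> exists t : R, Rbar_lt t T /\ x t = s) /\
     filterlim (X1 x) (end_filter T) (locally 0) /\
     filterlim (Y1 x y) (end_filter T) (locally (- ((p - m) / (sigma + 2)))) /\
     filterlim (Z1 x z) (end_filter T) (locally 0)) /\
  (pF (INR N) m sigma < p ->
     filterlim (X1 x) (end_filter T) (locally 0) /\
     filterlim (Y1 x y) (end_filter T) (locally 0) /\
     filterlim (Z1 x z) (end_filter T) (locally 0)).
Proof.
  intros HN Hm Hs Hp Hsol Hmax Hzx Hlx Hly _.
  assert (Hsign := pF_sign N m sigma p HN Hs).
  assert (Hpos : 0 < sigma + 2) by lra.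
  split; [|split]; intros Hcmp.
  - apply (l0_subcritical N m sigma p T x y z); auto.
    rewrite Hsign; apply Rdiv_neg_pos; lra.
  - apply (l0_critical N m sigma p T x y z); auto.
    replace (p - pF (INR N) m sigma) with 0 in Hsign by lra.
    unfold Rdiv in Hsign; rewrite Rmult_0_l in Hsign; lra.
  - apply (l0_supercritical N m sigma p T x y z); auto.
    rewrite Hsign; apply Rdiv_lt_0_compat; lra.
Qed.
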